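(* There exists a universal constant $L'>1$ satisfying the following. Let $M$ be a $C^{1,1}$ $2$-manifold in $\mathbb{R}^3$ and let $p_0$ be an $\mathbb{H}$-regular point of $M$. Then there exist $\epsilon>0$ and an $L'$-bi-Lipschitz map $G:[-\epsilon,\epsilon]^2\to(M,|\cdot|)$ (Euclidean metrics on both sides) such that (1) $G(0,0)=p_0$, and (2) for all $v\in[-\epsilon,\epsilon]$, the curve $u\mapsto G(u,v)$ is a horizontal curve.
   Context: On $\mathbb{R}^3$ let $X=\partial_x-\tfrac12y\partial_z$, $Y=\partial_y+\tfrac12x\partial_z$, and $H_p=\mathrm{span}\{X(p),Y(p)\}$. A point $p$ of a $C^{1,1}$ $2$-manifold $M$ is characteristic if $T_pM=H_p$ and $\mathbb{H}$-regular otherwise. An absolutely continuous curve $(x(t),y(t),z(t))$ is horizontal if $z'+\tfrac12x'y-\tfrac12xy'=0$ almost everywhere. A map is $L'$-bi-Lipschitz if $L'^{-1}|a-b|\le|G(a)-G(b)|\le L'|a-b|$. *)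

From Stdlib Require Import Reals Lra List.
Import ListNotations.
Open Scope R_scope.

Definition R3 : Type := (R * R * R)%type.
Definition mk3 (x y z : R) : R3 := (x, y, z).
Definition px (p : R3) : R := fst (fst p).
Definition py (p : R3) : R := snd (fst p).
Definition pz (p : R3) : R := snd p.

Definition add3 (p q : R3) : R3 := mk3 (px p + px q) (py p + py q) (pz p + pz q).
Definition scal3 (a : R) (p : R3) : R3 := mk3 (a * px p) (a * py p) (a * pz p).
Definition dot3 (p q : R3) : R := px p * px q + py p * py q + pz p * pz q.
Definition norm3 (p : R3) : R := sqrt (dot3 p p).
Definition dist3 (p q : R3) : R :=
  sqrt ((px p - px q)^2 + (py p - py q)^2 + (pz p - pz q)^2).
Definition dist2 (a b : R * R) : R :=
  sqrt ((fst a - fst b)^2 + (snd a - snd b)^2).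

Definition has_gradient (f : R3 -> R) (p g : R3) : Prop :=
  forall eps, 0 < eps -> exists delta, 0 < delta /\
    forall h : R3, norm3 h < delta ->
      Rabs (f (add3 p h) - f p - dot3 g h) <= eps * norm3 h.

(** M (a subset of R^3) is an embedded C^{1,1} 2-manifold: locally near each of
    its points it is the zero set of a C^{1,1} function (differentiable with
    Lipschitz gradient) with nonvanishing gradient. *)
Definition C11_surface (M : R3 -> Prop) : Prop :=
  forall p, M p -> exists r, 0 < r /\ exists (f : R3 -> R) (g : R3 -> R3),
    (forall q, dist3 q p < r -> has_gradient f q (g q) /\ g q <> mk3 0 0 0) /\
    (exists K, forall q q', dist3 q p < r -> dist3 q' p < r ->
        dist3 (g q) (g q') <= K * dist3 q q') /\
    (forall q, dist3 q p < r -> (M q <-> f q = 0)).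

Definition tangent_space (M : R3 -> Prop) (p : R3) (v : R3) : Prop :=
  exists (gam : R -> R3) (delta : R), 0 < delta /\ gam 0 = p /\
    (forall t, Rabs t < delta -> M (gam t)) /\
    derivable_pt_lim (fun t => px (gam t)) 0 (px v) /\
    derivable_pt_lim (fun t => py (gam t)) 0 (py v) /\
    derivable_pt_lim (fun t => pz (gam t)) 0 (pz v).

Definition Xf (p : R3) : R3 := mk3 1 0 (- (py p) / 2).
Definition Yf (p : R3) : R3 := mk3 0 1 (px p / 2).
Definition Hplane (p : R3) (v : R3) : Prop :=
  exists a b : R, v = add3 (scal3 a (Xf p)) (scal3 b (Yf p)).

Definition characteristic (M : R3 -> Prop) (p : R3) : Prop :=
  M p /\ (forall v, tangent_space M p v <-> Hplane p v).
Definition H_regular (M : R3 -> Prop) (p : R3) : Prop :=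
  M p /\ ~ characteristic M p.

Definition null_set (N : R -> Prop) : Prop :=
  forall eps, 0 < eps -> exists c d : nat -> R,
    (forall n, c n <= d n) /\
    (forall t, N t -> exists n, c n < t < d n) /\
    (forall n, sum_f_R0 (fun k => d k - c k) n <= eps).

Fixpoint ordered_intervals (a : R) (l : list (R * R)) (b : R) : Prop :=
  match l with
  | nil => a <= b
  | (s, t) :: l' => a <= s /\ s <= t /\ ordered_intervals t l' b
  end.
Fixpoint total_length (l : list (R * R)) : R :=
  match l with nil => 0 | (s, t) :: l' => (t - s) + total_length l' end.
Fixpoint total_variation (gam : R -> R3) (l : list (R * R)) : R :=
  match l with nil => 0 | (s, t) :: l' => dist3 (gam t) (gam s) + total_variation gam l' end.

Definition abs_continuous_on (a b : R) (gam : R -> R3) : Prop :=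
  forall eps, 0 < eps -> exists delta, 0 < delta /\
    forall l, ordered_intervals a l b -> total_length l < delta ->
      total_variation gam l < eps.

Definition horizontal_curve (a b : R) (gam : R -> R3) : Prop :=
  abs_continuous_on a b gam /\
  null_set (fun t => a <= t <= b /\
    ~ (exists dx dy dz : R,
         derivable_pt_lim (fun s => px (gam s)) t dx /\
         derivable_pt_lim (fun s => py (gam s)) t dy /\
         derivable_pt_lim (fun s => pz (gam s)) t dz /\
         dz + / 2 * dx * py (gam t) - / 2 * px (gam t) * dy = 0)).

Definition in_square (e : R) (a : R * R) : Prop :=
  - e <= fst a <= e /\ - e <= snd a <= e.
Definition bi_lipschitz_on_square (L e : R) (G : R * R -> R3) : Prop :=
  forall a b, in_square e a -> in_square e b ->
    / L * dist2 a b <= dist3 (G a) (G b) /\ dist3 (G a) (G b) <= L * dist2 a b.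

(* Near the H-regular point p0, M is the zero set of f, with Lipschitz gradient g. Let
   n = (y/2, -x/2, 1) be the Euclidean normal of the horizontal plane. If g(p0) were parallel to
   n(p0), the tangent plane g(p0)^perp would be the horizontal plane and p0 would be
   characteristic; so W = g x n is a Lipschitz field, nonzero near p0, which is both horizontal
   and tangent to the level sets of f, and V = g x W completes it to a tangent frame. The flows
   of W and V, obtained by Picard iteration, preserve f; hence G(u, v) = Phi_W^u (Phi_V^v p0)
   maps a small square into M, and its u-lines are integral curves of W, i.e. horizontal.
   The flows are C^{1,1} in time and Lipschitz in the initial point, so G differs from the
   affine map p0 + u W(p0) + v V(p0) by at most C eps (|du| + |dv|); with W(p0), V(p0)
   orthonormal and eps small, G is 2-bi-Lipschitz. *)

From Stdlib Require Import Reals Lra Psatz.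
From Coquelicot Require Import Coquelicot.
Open Scope R_scope.

(** * Vectors of R^3 and the l1 distance *)

Definition sub3 (p q : R3) : R3 := mk3 (px p - px q) (py p - py q) (pz p - pz q).
Definition cross3 (a b : R3) : R3 :=
  mk3 (py a * pz b - pz a * py b) (pz a * px b - px a * pz b) (px a * py b - py a * px b).
Definition zero3 : R3 := mk3 0 0 0.
Definition norm1 (p : R3) : R := Rabs (px p) + Rabs (py p) + Rabs (pz p).
Definition dist1 (p q : R3) : R := norm1 (sub3 p q).

Arguments px _ /. Arguments py _ /. Arguments pz _ /. Arguments mk3 _ _ _ /.

Ltac unfold_R3 :=
  unfold dist1, norm1, sub3, add3, scal3, dot3, cross3, zero3, mk3, px, py, pz in *; simpl in *.
Ltac Rabs_lra :=
  unfold Rabs in *;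
  repeat match goal with
  | |- context [Rcase_abs ?x] => destruct (Rcase_abs x)
  | H : context [Rcase_abs ?x] |- _ => destruct (Rcase_abs x)
  end; lra.

Lemma R3_ext (a b : R3) : px a = px b -> py a = py b -> pz a = pz b -> a = b.
Proof. destruct a as [[a1 a2] a3], b as [[b1 b2] b3]; simpl; intros; subst; reflexivity. Qed.

Ltac R3_ring := apply R3_ext; unfold_R3; ring.

Lemma Rabs_mul_self x : Rabs x * Rabs x = x * x.
Proof. rewrite <- Rabs_mult. apply Rabs_right, Rle_ge, Rle_0_sqr. Qed.

Lemma norm1_ge0 p : 0 <= norm1 p.
Proof.
  unfold norm1. pose proof (Rabs_pos (px p)); pose proof (Rabs_pos (py p)); pose proof (Rabs_pos (pz p)). lra.
Qed.
Lemma dist1_ge0 p q : 0 <= dist1 p q.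
Proof. apply norm1_ge0. Qed.
Lemma dist1_sym p q : dist1 p q = dist1 q p.
Proof. unfold_R3. Rabs_lra. Qed.
Lemma dist1_triangle p q w : dist1 p w <= dist1 p q + dist1 q w.
Proof. unfold_R3. Rabs_lra. Qed.
Lemma dist1_refl p : dist1 p p = 0.
Proof. unfold_R3. Rabs_lra. Qed.
Lemma dist1_le0_eq p q : dist1 p q <= 0 -> p = q.
Proof. intros H; apply R3_ext; unfold_R3; Rabs_lra. Qed.
Lemma norm1_add a b : norm1 (add3 a b) <= norm1 a + norm1 b.
Proof. unfold_R3. Rabs_lra. Qed.
Lemma norm1_scal c a : norm1 (scal3 c a) = Rabs c * norm1 a.
Proof. unfold_R3. rewrite !Rabs_mult. ring. Qed.
Lemma norm1_le_dist1 a b : norm1 a <= norm1 b + dist1 a b.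
Proof. unfold_R3. Rabs_lra. Qed.
Lemma dist1_add3_l q a b : dist1 (add3 q a) (add3 q b) = dist1 a b.
Proof. unfold dist1; f_equal; R3_ring. Qed.
Lemma dist1_scal c x y : dist1 (scal3 c x) (scal3 c y) = Rabs c * dist1 x y.
Proof. unfold dist1; rewrite <- norm1_scal; f_equal; R3_ring. Qed.
Lemma dist1_sub3 a b a' b' : dist1 (sub3 a b) (sub3 a' b') <= dist1 a a' + dist1 b b'.
Proof. unfold_R3. Rabs_lra. Qed.

Lemma Rabs_px_le_dist1 a b : Rabs (px a - px b) <= dist1 a b.
Proof. unfold_R3. Rabs_lra. Qed.
Lemma Rabs_py_le_dist1 a b : Rabs (py a - py b) <= dist1 a b.
Proof. unfold_R3. Rabs_lra. Qed.
Lemma Rabs_pz_le_dist1 a b : Rabs (pz a - pz b) <= dist1 a b.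
Proof. unfold_R3. Rabs_lra. Qed.

Lemma Rabs_dot3_le a b : Rabs (dot3 a b) <= norm1 a * norm1 b.
Proof.
  destruct a as [[a1 a2] a3], b as [[b1 b2] b3]; unfold_R3.
  eapply Rle_trans; [apply Rabs_triang|]. eapply Rle_trans; [apply Rplus_le_compat_r, Rabs_triang|].
  rewrite !Rabs_mult.
  pose proof (Rabs_pos a1); pose proof (Rabs_pos a2); pose proof (Rabs_pos a3);
  pose proof (Rabs_pos b1); pose proof (Rabs_pos b2); pose proof (Rabs_pos b3). nra.
Qed.

Lemma norm1_cross3_le a b : norm1 (cross3 a b) <= norm1 a * norm1 b.
Proof.
  assert (Hdiff : forall x y z w, Rabs (x * y - z * w) <= Rabs x * Rabs y + Rabs z * Rabs w).
  { intros. rewrite <- !Rabs_mult, <- (Rabs_Ropp (z * w)). apply Rabs_triang. }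
  destruct a as [[a1 a2] a3], b as [[b1 b2] b3]; unfold_R3.
  pose proof (Hdiff a2 b3 a3 b2); pose proof (Hdiff a3 b1 a1 b3); pose proof (Hdiff a1 b2 a2 b1).
  pose proof (Rabs_pos a1); pose proof (Rabs_pos a2); pose proof (Rabs_pos a3);
  pose proof (Rabs_pos b1); pose proof (Rabs_pos b2); pose proof (Rabs_pos b3). nra.
Qed.

Lemma dot3_ge0 x : 0 <= dot3 x x.
Proof. unfold dot3. nra. Qed.

Lemma dot3_pos x : x <> zero3 -> 0 < dot3 x x.
Proof.
  intros Hx. destruct (Rle_lt_dec (dot3 x x) 0) as [H|H]; [exfalso|exact H]. apply Hx.
  destruct x as [[x1 x2] x3]. unfold_R3.
  pose proof (Rle_0_sqr x1); pose proof (Rle_0_sqr x2); pose proof (Rle_0_sqr x3). unfold Rsqr in *.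
  f_equal; [f_equal|]; apply Rsqr_0_uniq; unfold Rsqr; lra.
Qed.

Lemma norm3_ge0 x : 0 <= norm3 x.
Proof. apply sqrt_pos. Qed.
Lemma norm3_sqr x : norm3 x * norm3 x = dot3 x x.
Proof. apply sqrt_sqrt, dot3_ge0. Qed.
Lemma norm3_pos x : x <> zero3 -> 0 < norm3 x.
Proof. intros. apply sqrt_lt_R0, dot3_pos; assumption. Qed.

Lemma norm3_le_norm1 a : norm3 a <= norm1 a.
Proof.
  apply Rsqr_incr_0_var; [|apply norm1_ge0]. unfold Rsqr. rewrite norm3_sqr.
  unfold dot3, norm1.
  pose proof (Rabs_pos (px a)); pose proof (Rabs_pos (py a)); pose proof (Rabs_pos (pz a)).
  pose proof (Rsqr_abs (px a)); pose proof (Rsqr_abs (py a)); pose proof (Rsqr_abs (pz a)).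
  unfold Rsqr in *. nra.
Qed.

Lemma norm1_le_2norm3 a : norm1 a <= 2 * norm3 a.
Proof.
  pose proof (norm3_ge0 a). apply Rsqr_incr_0_var; [|lra]. unfold Rsqr.
  replace (2 * norm3 a * (2 * norm3 a)) with (4 * (norm3 a * norm3 a)) by ring. rewrite norm3_sqr.
  unfold dot3, norm1.
  pose proof (Rsqr_abs (px a)); pose proof (Rsqr_abs (py a)); pose proof (Rsqr_abs (pz a)).
  pose proof (Rle_0_sqr (Rabs (px a) - Rabs (py a))); pose proof (Rle_0_sqr (Rabs (py a) - Rabs (pz a))).
  pose proof (Rle_0_sqr (Rabs (px a) - Rabs (pz a))).
  unfold Rsqr in *. nra.
Qed.

Lemma dist3_norm3 p q : dist3 p q = norm3 (sub3 p q).
Proof. unfold dist3, norm3. f_equal. unfold_R3. ring. Qed.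
Lemma dist3_le_dist1 p q : dist3 p q <= dist1 p q.
Proof. rewrite dist3_norm3. apply norm3_le_norm1. Qed.
Lemma dist1_le_2dist3 p q : dist1 p q <= 2 * dist3 p q.
Proof. rewrite dist3_norm3. apply norm1_le_2norm3. Qed.
Lemma dist3_ge0 p q : 0 <= dist3 p q.
Proof. apply sqrt_pos. Qed.
Lemma dist3_refl q : dist3 q q = 0.
Proof. rewrite dist3_norm3. unfold norm3. rewrite <- sqrt_0. f_equal. unfold_R3. ring. Qed.

Lemma dot3_cross3_self a b : dot3 (cross3 a b) (cross3 a b) = dot3 a a * dot3 b b - dot3 a b * dot3 a b.
Proof. unfold_R3. ring. Qed.

Lemma norm3_triangle x y : norm3 (add3 x y) <= norm3 x + norm3 y.
Proof.
  pose proof (norm3_ge0 x); pose proof (norm3_ge0 y).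
  apply Rsqr_incr_0_var; [|lra]. unfold Rsqr. rewrite norm3_sqr.
  replace ((norm3 x + norm3 y) * (norm3 x + norm3 y))
    with (norm3 x * norm3 x + norm3 y * norm3 y + 2 * (norm3 x * norm3 y)) by ring.
  rewrite !norm3_sqr.
  assert (Hcs : dot3 x y <= norm3 x * norm3 y).
  { destruct (Rle_dec (dot3 x y) 0). { nra. }
    apply Rsqr_incr_0_var; [|nra]. unfold Rsqr.
    replace (norm3 x * norm3 y * (norm3 x * norm3 y))
      with ((norm3 x * norm3 x) * (norm3 y * norm3 y)) by ring.
    rewrite !norm3_sqr.
    pose proof (dot3_cross3_self x y). pose proof (dot3_ge0 (cross3 x y)). lra. }
  replace (dot3 (add3 x y) (add3 x y)) with (dot3 x x + dot3 y y + 2 * dot3 x y) by (unfold_R3; ring). lra.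
Qed.

Lemma dot3_cross3_l a b : dot3 a (cross3 a b) = 0.
Proof. unfold_R3. ring. Qed.
Lemma cross3_cross3 a b c : cross3 a (cross3 b c) = sub3 (scal3 (dot3 a c) b) (scal3 (dot3 a b) c).
Proof. R3_ring. Qed.
Lemma dot3_comm a b : dot3 a b = dot3 b a.
Proof. unfold dot3. ring. Qed.
Lemma scal3_0 a : scal3 0 a = zero3.
Proof. R3_ring. Qed.
Lemma sub3_eq_zero3 a b : sub3 a b = zero3 -> a = b.
Proof.
  intros H. apply R3_ext; [apply (f_equal px) in H | apply (f_equal py) in H | apply (f_equal pz) in H];
    unfold_R3; lra.
Qed.
Lemma scal3_eq_zero3 c a : scal3 c a = zero3 -> a <> zero3 -> c = 0.
Proof.
  intros H Ha. destruct (Req_dec c 0) as [|Hc]; auto. exfalso. apply Ha.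
  replace a with (scal3 (/ c) (scal3 c a)) by (apply R3_ext; unfold_R3; field; auto).
  rewrite H. R3_ring.
Qed.

Lemma cross3_neq0 a b : a <> zero3 -> b <> zero3 -> dot3 a b = 0 -> cross3 a b <> zero3.
Proof.
  intros Ha Hb Hab H. pose proof (dot3_cross3_self a b). rewrite H, Hab in H0.
  pose proof (dot3_pos a Ha). pose proof (dot3_pos b Hb).
  replace (dot3 zero3 zero3) with 0 in H0 by (unfold_R3; ring). nra.
Qed.

Lemma dot3_normalize x : x <> zero3 -> dot3 (scal3 (/ norm3 x) x) (scal3 (/ norm3 x) x) = 1.
Proof.
  intros Hx. pose proof (norm3_pos x Hx).
  transitivity (/ norm3 x * / norm3 x * dot3 x x); [unfold_R3; ring|].
  rewrite <- norm3_sqr. field. lra.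
Qed.

(** * Integrals of Lipschitz paths *)

Definition lipschitz_path (h : R -> R3) (L : R) : Prop :=
  forall s s', dist1 (h s) (h s') <= L * Rabs (s - s').

Lemma lipschitz_path_displacement gam q L t :
  lipschitz_path gam L -> gam 0 = q -> dist1 (gam t) q <= L * Rabs t.
Proof. intros Hl H0. rewrite <- H0. replace (Rabs t) with (Rabs (t - 0)) by (f_equal; ring). apply Hl. Qed.

Lemma lipschitz_continuous (phi : R -> R) L :
  (forall s s', Rabs (phi s - phi s') <= L * Rabs (s - s')) -> forall x, continuous phi x.
Proof.
  intros H x. apply continuity_pt_filterlim. intros e He.
  pose proof (Rabs_pos L); pose proof (RRle_abs L).
  exists (e / (Rabs L + 1)). split; [apply Rdiv_lt_0_compat; lra|].
  intros y [_ Hy]. simpl in Hy. unfold R_dist in *.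
  apply Rle_lt_trans with ((Rabs L + 1) * Rabs (y - x)).
  { eapply Rle_trans; [apply H|]. pose proof (Rabs_pos (y - x)). nra. }
  replace e with ((Rabs L + 1) * (e / (Rabs L + 1))) by (field; lra).
  apply Rmult_lt_compat_l; lra.
Qed.

Lemma lipschitz_path_coord (c : R3 -> R) h L :
  (forall a b, Rabs (c a - c b) <= dist1 a b) -> lipschitz_path h L ->
  forall x, continuous (fun s => c (h s)) x.
Proof.
  intros Hc Hh. apply lipschitz_continuous with L. intros s s'.
  eapply Rle_trans; [apply Hc | apply Hh].
Qed.

Ltac coord_continuity :=
  let go c h lem := first [ exact (lipschitz_path_coord c h _ lem ltac:(eassumption))
                          | apply (lipschitz_path_coord c h _ lem); eassumption ] in
  lazymatch goal with
  | |- context [fun s => px (@?h s)] => go px h Rabs_px_le_dist1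
  | |- context [fun s => py (@?h s)] => go py h Rabs_py_le_dist1
  | |- context [fun s => pz (@?h s)] => go pz h Rabs_pz_le_dist1
  end.

Definition RInt3 (h : R -> R3) (a b : R) : R3 :=
  mk3 (RInt (fun s => px (h s)) a b) (RInt (fun s => py (h s)) a b) (RInt (fun s => pz (h s)) a b).

Lemma ex_RInt_continuous_R (phi : R -> R) a b : (forall x, continuous phi x) -> ex_RInt phi a b.
Proof. intros H; apply (@ex_RInt_continuous R_CompleteNormedModule); intros; apply H. Qed.

Lemma RInt_plus_R (phi psi : R -> R) a b : (forall x, continuous phi x) -> (forall x, continuous psi x) ->
  RInt (fun x => phi x + psi x) a b = RInt phi a b + RInt psi a b.
Proof.
  intros Hphi Hpsi.
  exact (RInt_plus phi psi a b (ex_RInt_continuous_R _ _ _ Hphi) (ex_RInt_continuous_R _ _ _ Hpsi)).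
Qed.

Lemma RInt3_sub h1 h2 L1 L2 a b : lipschitz_path h1 L1 -> lipschitz_path h2 L2 ->
  sub3 (RInt3 h1 a b) (RInt3 h2 a b) = RInt3 (fun s => sub3 (h1 s) (h2 s)) a b.
Proof.
  intros H1 H2.
  assert (Hsub : forall phi psi : R -> R, (forall x, continuous phi x) -> (forall x, continuous psi x) ->
    RInt phi a b - RInt psi a b = RInt (fun x => phi x - psi x) a b).
  { intros phi psi Hphi Hpsi. symmetry.
    exact (RInt_minus phi psi a b (ex_RInt_continuous_R _ _ _ Hphi) (ex_RInt_continuous_R _ _ _ Hpsi)). }
  apply R3_ext;
    [ apply (Hsub (fun s => px (h1 s)) (fun s => px (h2 s)))
    | apply (Hsub (fun s => py (h1 s)) (fun s => py (h2 s)))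
    | apply (Hsub (fun s => pz (h1 s)) (fun s => pz (h2 s))) ]; coord_continuity.
Qed.

Lemma RInt3_Chasles h L a b c : lipschitz_path h L -> sub3 (RInt3 h a c) (RInt3 h a b) = RInt3 h b c.
Proof.
  intros H.
  assert (Hchasles : forall phi : R -> R, (forall x, continuous phi x) ->
    RInt phi a c - RInt phi a b = RInt phi b c).
  { intros phi Hphi. rewrite <- (RInt_Chasles phi a b c); try apply ex_RInt_continuous_R; auto.
    unfold plus; simpl; ring. }
  apply R3_ext;
    [ apply (Hchasles (fun s => px (h s)))
    | apply (Hchasles (fun s => py (h s)))
    | apply (Hchasles (fun s => pz (h s))) ]; coord_continuity.
Qed.

Lemma RInt3_const c a b : RInt3 (fun _ => c) a b = scal3 (b - a) c.
Proof. apply R3_ext; simpl; rewrite RInt_const; reflexivity. Qed.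

Lemma continuous_Rabs_comp (phi : R -> R) :
  (forall x, continuous phi x) -> forall x, continuous (fun s => Rabs (phi s)) x.
Proof. intros H x. apply continuous_comp; [apply H | apply continuous_Rabs]. Qed.

Lemma norm1_RInt3_le_ordered h L a b M : a <= b -> lipschitz_path h L ->
  (forall x, a <= x <= b -> norm1 (h x) <= M) -> norm1 (RInt3 h a b) <= (b - a) * M.
Proof.
  intros Hab H HM.
  assert (Cx : forall x, continuous (fun s => Rabs (px (h s))) x)
    by (apply continuous_Rabs_comp; coord_continuity).
  assert (Cy : forall x, continuous (fun s => Rabs (py (h s))) x)
    by (apply continuous_Rabs_comp; coord_continuity).
  assert (Cz : forall x, continuous (fun s => Rabs (pz (h s))) x)
    by (apply continuous_Rabs_comp; coord_continuity).
  assert (Cxy : forall x, continuous (fun s => Rabs (px (h s)) + Rabs (py (h s))) x)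
    by (intro; apply (continuous_plus (fun s => Rabs (px (h s))) (fun s => Rabs (py (h s)))); auto).
  assert (Hsum : RInt (fun s => norm1 (h s)) a b
    = RInt (fun s => Rabs (px (h s))) a b + RInt (fun s => Rabs (py (h s))) a b
      + RInt (fun s => Rabs (pz (h s))) a b).
  { unfold norm1. rewrite (RInt_plus_R (fun s => Rabs (px (h s)) + Rabs (py (h s)))), RInt_plus_R; auto. }
  assert (Hle : RInt (fun s => norm1 (h s)) a b <= RInt (fun _ => M) a b).
  { apply RInt_le; auto; [| apply ex_RInt_const | intros; apply HM; lra].
    apply ex_RInt_continuous_R. intro x.
    apply (continuous_plus (fun s => Rabs (px (h s)) + Rabs (py (h s))) (fun s => Rabs (pz (h s)))); auto. }
  rewrite RInt_const in Hle. unfold scal in Hle; simpl in Hle; unfold mult in Hle; simpl in Hle.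
  assert (Ax : Rabs (RInt (fun s => px (h s)) a b) <= RInt (fun s => Rabs (px (h s))) a b)
    by (apply abs_RInt_le; auto; apply ex_RInt_continuous_R; coord_continuity).
  assert (Ay : Rabs (RInt (fun s => py (h s)) a b) <= RInt (fun s => Rabs (py (h s))) a b)
    by (apply abs_RInt_le; auto; apply ex_RInt_continuous_R; coord_continuity).
  assert (Az : Rabs (RInt (fun s => pz (h s)) a b) <= RInt (fun s => Rabs (pz (h s))) a b)
    by (apply abs_RInt_le; auto; apply ex_RInt_continuous_R; coord_continuity).
  change (norm1 (RInt3 h a b)) with (Rabs (RInt (fun s => px (h s)) a b)
    + Rabs (RInt (fun s => py (h s)) a b) + Rabs (RInt (fun s => pz (h s)) a b)). lra.
Qed.

Lemma norm1_RInt3_le h L a b M : lipschitz_path h L ->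
  (forall x, Rmin a b <= x <= Rmax a b -> norm1 (h x) <= M) -> norm1 (RInt3 h a b) <= Rabs (b - a) * M.
Proof.
  intros H HM. destruct (Rle_dec a b).
  - rewrite Rabs_right by lra. apply norm1_RInt3_le_ordered with L; auto.
    intros; apply HM; rewrite Rmin_left, Rmax_right; lra.
  - rewrite Rabs_left by lra.
    assert (Hswap : forall phi : R -> R, (forall x, continuous phi x) ->
      Rabs (RInt phi a b) = Rabs (RInt phi b a)).
    { intros phi Hphi. rewrite <- (opp_RInt_swap phi b a) by (apply ex_RInt_continuous_R; exact Hphi).
      apply Rabs_Ropp. }
    assert (Hba : norm1 (RInt3 h b a) <= (a - b) * M).
    { apply norm1_RInt3_le_ordered with L; auto; [lra|].
      intros; apply HM; rewrite Rmin_right, Rmax_left; lra. }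
    change (norm1 (RInt3 h a b)) with (Rabs (RInt (fun s => px (h s)) a b)
      + Rabs (RInt (fun s => py (h s)) a b) + Rabs (RInt (fun s => pz (h s)) a b)).
    rewrite !(Hswap (fun s => _ (h s))) by coord_continuity.
    replace (- (b - a)) with (a - b) by ring. exact Hba.
Qed.

Lemma le_of_le_geometric x y c : (forall n, x <= y + c * (/2)^n) -> x <= y.
Proof.
  intros H. destruct (Rle_dec x y) as [Hxy|Hxy]; auto. exfalso.
  destruct (Rle_dec c 0) as [Hc|Hc]. { specialize (H O). simpl in H. lra. }
  destruct (pow_lt_1_zero (/2) ltac:(rewrite Rabs_right; lra) ((x - y) / c)) as [N HN].
  { apply Rdiv_lt_0_compat; lra. }
  specialize (HN N (le_n N)). rewrite Rabs_right in HN by (apply Rle_ge, pow_le; lra).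
  specialize (H N). apply Rmult_lt_compat_l with (r := c) in HN; [|lra].
  replace (c * ((x - y) / c)) with (x - y) in HN by (field; lra). lra.
Qed.

Lemma geometric_increments_bound (u : nat -> R) c :
  (forall n, Rabs (u (S n) - u n) <= c * (/2)^n) ->
  forall n m, (n <= m)%nat -> Rabs (u m - u n) <= 2 * c * (/2)^n - 2 * c * (/2)^m.
Proof.
  intros H n m Hnm. induction Hnm.
  - replace (u n - u n) with 0 by ring. rewrite Rabs_R0. lra.
  - replace (u (S m) - u n) with ((u (S m) - u m) + (u m - u n)) by ring.
    eapply Rle_trans; [apply Rabs_triang|]. pose proof (H m). simpl. lra.
Qed.

(* [real (Lim_seq u)] is a junk value unless [u] converges; the geometric bound on
   the increments is what makes it the actual limit. *)
Lemma Lim_seq_geometric_error (u : nat -> R) c :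
  (forall n, Rabs (u (S n) - u n) <= c * (/2)^n) ->
  forall n, Rabs (real (Lim_seq u) - u n) <= 2 * c * (/2)^n.
Proof.
  intros H.
  assert (Htail : forall n k, (n <= k)%nat -> Rabs (u k - u n) <= 2 * c * (/2)^n).
  { intros n k Hk. pose proof (geometric_increments_bound u c H n k Hk).
    assert (0 <= c) by (specialize (H O); pose proof (Rabs_pos (u 1%nat - u 0%nat)); simpl in H; lra).
    pose proof (pow_le (/2) k ltac:(lra)). nra. }
  assert (Hex : ex_finite_lim_seq u).
  { apply ex_lim_seq_cauchy_corr. intros e.
    destruct (pow_lt_1_zero (/2) ltac:(rewrite Rabs_right; lra) (e / (4 * Rabs c + 1))) as [N HN].
    { apply Rdiv_lt_0_compat; [apply cond_pos|pose proof (Rabs_pos c); lra]. }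
    exists N. intros n m Hn Hm.
    specialize (HN N (le_n N)). rewrite Rabs_right in HN by (apply Rle_ge, pow_le; lra).
    pose proof (Htail N n Hn); pose proof (Htail N m Hm). pose proof (cond_pos e).
    pose proof (Rabs_pos c); pose proof (RRle_abs c). pose proof (pow_le (/2) N ltac:(lra)).
    apply Rmult_lt_compat_l with (r := 4 * Rabs c + 1) in HN; [|lra].
    replace ((4 * Rabs c + 1) * (e / (4 * Rabs c + 1))) with (pos e) in HN by (field; lra).
    assert (4 * c * (/2)^N <= (4 * Rabs c + 1) * (/2)^N) by nra.
    replace (u n - u m) with ((u n - u N) - (u m - u N)) by ring. Rabs_lra. }
  intros n. destruct Hex as [l Hl]. rewrite (is_lim_seq_unique u l Hl). simpl.
  apply is_lim_seq_incr_n with (N := n) in Hl.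
  assert (Hup : Rbar_le l (u n + 2 * c * (/2)^n)).
  { apply (is_lim_seq_le (fun k => u (k + n)%nat) (fun _ => u n + 2 * c * (/2)^n));
    [| exact Hl | apply is_lim_seq_const].
    intros k. pose proof (Htail n (k + n)%nat ltac:(lia)). Rabs_lra. }
  assert (Hlow : Rbar_le (u n - 2 * c * (/2)^n) l).
  { apply (is_lim_seq_le (fun _ => u n - 2 * c * (/2)^n) (fun k => u (k + n)%nat));
    [| apply is_lim_seq_const | exact Hl].
    intros k. pose proof (Htail n (k + n)%nat ltac:(lia)). Rabs_lra. }
  simpl in Hup, Hlow. Rabs_lra.
Qed.

(** * Derivatives of space curves *)

Definition derivable3 (gam : R -> R3) (t : R) (w : R3) : Prop :=
  derivable_pt_lim (fun s => px (gam s)) t (px w) /\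
  derivable_pt_lim (fun s => py (gam s)) t (py w) /\
  derivable_pt_lim (fun s => pz (gam s)) t (pz w).

Lemma dist1_sub3_scal3 a b c x : dist1 (sub3 a b) (scal3 c x) =
  Rabs (px a - px b - c * px x) + Rabs (py a - py b - c * py x) + Rabs (pz a - pz b - c * pz x).
Proof. reflexivity. Qed.

Lemma derivable_pt_lim_small_o (phi : R -> R) t l :
  derivable_pt_lim phi t l <->
  forall e, 0 < e -> exists d, 0 < d /\ forall s, Rabs (s - t) < d ->
    Rabs (phi s - phi t - (s - t) * l) <= e * Rabs (s - t).
Proof.
  split.
  - intros H e He. destruct (H e He) as [d Hd]. exists d. split; [apply cond_pos|].
    intros s Hs. destruct (Req_dec s t) as [->|Hst].
    { replace (phi t - phi t - (t - t) * l) with 0 by ring. rewrite Rabs_R0.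
      pose proof (Rabs_pos (t - t)). nra. }
    specialize (Hd (s - t) ltac:(lra) Hs). replace (t + (s - t)) with s in Hd by ring.
    replace (phi s - phi t - (s - t) * l) with ((s - t) * ((phi s - phi t) / (s - t) - l)) by (field; lra).
    rewrite Rabs_mult, Rmult_comm. apply Rmult_le_compat_r; [apply Rabs_pos | lra].
  - intros H e He. destruct (H (e / 2)) as [d [Hd Hs]]; [lra|].
    exists (mkposreal d Hd). intros h Hh0 Hh. simpl in Hh.
    specialize (Hs (t + h)). replace (t + h - t) with h in Hs by ring. specialize (Hs Hh).
    replace ((phi (t + h) - phi t) / h - l) with ((phi (t + h) - phi t - h * l) / h) by (field; auto).
    unfold Rdiv. rewrite Rabs_mult, Rabs_inv.
    assert (0 < Rabs h) by (apply Rabs_pos_lt; auto).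
    apply Rle_lt_trans with (e / 2 * Rabs h * / Rabs h).
    + apply Rmult_le_compat_r; [apply Rlt_le, Rinv_0_lt_compat|]; auto.
    + field_simplify; lra.
Qed.

Lemma derivable_pt_lim_taylor2 (phi : R -> R) t l C del : 0 < del ->
  (forall s, Rabs (s - t) < del -> Rabs (phi s - phi t - (s - t) * l) <= C * ((s - t) * (s - t))) ->
  derivable_pt_lim phi t l.
Proof.
  intros Hdel H. apply derivable_pt_lim_small_o. intros e He.
  pose proof (Rabs_pos C); pose proof (RRle_abs C).
  exists (Rmin del (e / (Rabs C + 1))). split; [apply Rmin_pos; [|apply Rdiv_lt_0_compat]; lra|].
  intros s Hs. eapply Rle_trans; [apply H; eapply Rlt_le_trans; [apply Hs | apply Rmin_l]|].
  pose proof (Rmin_r del (e / (Rabs C + 1))). pose proof (Rabs_pos (s - t)).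
  assert (Rabs (s - t) * (Rabs C + 1) <= e).
  { apply Rle_trans with (e / (Rabs C + 1) * (Rabs C + 1)).
    - apply Rmult_le_compat_r; lra.
    - right; field; lra. }
  pose proof (Rsqr_abs (s - t)). unfold Rsqr in *. nra.
Qed.

Lemma derivable3_small_o gam t w : derivable3 gam t w ->
  forall e, 0 < e -> exists d, 0 < d /\ forall s, Rabs (s - t) < d ->
    dist1 (sub3 (gam s) (gam t)) (scal3 (s - t) w) <= e * Rabs (s - t).
Proof.
  intros (Dx & Dy & Dz) e He.
  destruct (proj1 (derivable_pt_lim_small_o _ _ _) Dx (e / 3)) as [dx [Hdx Bx]]; [lra|].
  destruct (proj1 (derivable_pt_lim_small_o _ _ _) Dy (e / 3)) as [dy [Hdy By]]; [lra|].
  destruct (proj1 (derivable_pt_lim_small_o _ _ _) Dz (e / 3)) as [dz [Hdz Bz]]; [lra|].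
  exists (Rmin dx (Rmin dy dz)). split; [repeat apply Rmin_pos; auto|].
  intros s Hs.
  pose proof (Rmin_l dx (Rmin dy dz)); pose proof (Rmin_r dx (Rmin dy dz));
    pose proof (Rmin_l dy dz); pose proof (Rmin_r dy dz).
  specialize (Bx s ltac:(lra)); specialize (By s ltac:(lra)); specialize (Bz s ltac:(lra)).
  rewrite dist1_sub3_scal3. lra.
Qed.

Lemma derivable3_taylor2 gam t w C del : 0 < del ->
  (forall s, Rabs (s - t) < del -> dist1 (sub3 (gam s) (gam t))
    (scal3 (s - t) w) <= C * ((s - t) * (s - t))) ->
  derivable3 gam t w.
Proof.
  intros Hdel H.
  assert (Hcoord : forall s, Rabs (s - t) < del ->
    Rabs (px (gam s) - px (gam t) - (s - t) * px w) <= C * ((s - t) * (s - t)) /\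
    Rabs (py (gam s) - py (gam t) - (s - t) * py w) <= C * ((s - t) * (s - t)) /\
    Rabs (pz (gam s) - pz (gam t) - (s - t) * pz w) <= C * ((s - t) * (s - t))).
  { intros s Hs. specialize (H s Hs). rewrite dist1_sub3_scal3 in H.
    pose proof (Rabs_pos (px (gam s) - px (gam t) - (s - t) * px w));
    pose proof (Rabs_pos (py (gam s) - py (gam t) - (s - t) * py w));
    pose proof (Rabs_pos (pz (gam s) - pz (gam t) - (s - t) * pz w)). lra. }
  split; [|split]; apply (derivable_pt_lim_taylor2 _ _ _ C del Hdel); intros s Hs; apply Hcoord, Hs.
Qed.

Lemma gradient_chain_rule f g gam t w :
  has_gradient f (gam t) g -> derivable3 gam t w -> derivable_pt_lim (fun s => f (gam s)) t (dot3 g w).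
Proof.
  intros Hf Hgam. apply derivable_pt_lim_small_o. intros e He.
  pose proof (norm1_ge0 g) as Hg0; pose proof (norm1_ge0 w) as Hw0.
  set (A := norm1 w + 1).
  set (e1 := Rmin 1 (e / (2 * (norm1 g + 1)))).
  assert (He1 : 0 < e1) by (apply Rmin_pos; [lra | apply Rdiv_lt_0_compat; lra]).
  assert (He1_1 : e1 <= 1) by apply Rmin_l.
  assert (He1_g : e1 * (norm1 g + 1) <= e / 2).
  { apply Rle_trans with (e / (2 * (norm1 g + 1)) * (norm1 g + 1)); [apply Rmult_le_compat_r, Rmin_r; lra|].
    right. field. lra. }
  destruct (derivable3_small_o gam t w Hgam e1 He1) as [d1 [Hd1 Hrem]].
  destruct (Hf (e / (2 * A))) as [d0 [Hd0 Hdiff]]; [apply Rdiv_lt_0_compat; unfold A; lra|].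
  exists (Rmin d1 (d0 / A)). split; [apply Rmin_pos; [|apply Rdiv_lt_0_compat; unfold A]; lra|].
  intros s Hs. pose proof (Rabs_pos (s - t)) as Hst.
  assert (Hs1 : Rabs (s - t) < d1) by (eapply Rlt_le_trans; [apply Hs | apply Rmin_l]).
  assert (Hs0 : A * Rabs (s - t) < d0).
  { assert (Rabs (s - t) < d0 / A) by (eapply Rlt_le_trans; [apply Hs | apply Rmin_r]).
    apply Rmult_lt_compat_l with (r := A) in H; [|unfold A; lra].
    replace (A * (d0 / A)) with d0 in H by (field; unfold A; lra). exact H. }
  set (h := sub3 (gam s) (gam t)).
  assert (Hrho : dist1 h (scal3 (s - t) w) <= e1 * Rabs (s - t)) by apply (Hrem s Hs1).
  assert (Hh : norm3 h <= A * Rabs (s - t)).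
  { pose proof (norm3_le_norm1 h). pose proof (norm1_le_dist1 h (scal3 (s - t) w)).
    rewrite norm1_scal in H0. unfold A. nra. }
  specialize (Hdiff h ltac:(lra)).
  replace (add3 (gam t) h) with (gam s) in Hdiff by (unfold h; R3_ring).
  assert (Hlin : Rabs (dot3 g h - (s - t) * dot3 g w) <= e / 2 * Rabs (s - t)).
  { replace (dot3 g h - (s - t) * dot3 g w) with (dot3 g (sub3 h (scal3 (s - t) w))) by (unfold_R3; ring).
    eapply Rle_trans; [apply Rabs_dot3_le|]. fold (dist1 h (scal3 (s - t) w)).
    pose proof (dist1_ge0 h (scal3 (s - t) w)). nra. }
  assert (Hquad : e / (2 * A) * norm3 h <= e / 2 * Rabs (s - t)).
  { apply Rle_trans with (e / (2 * A) * (A * Rabs (s - t))).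
    - apply Rmult_le_compat_l; [apply Rlt_le, Rdiv_lt_0_compat; unfold A; lra | exact Hh].
    - right. field. unfold A. lra. }
  replace (f (gam s) - f (gam t) - (s - t) * dot3 g w)
    with ((f (gam s) - f (gam t) - dot3 g h) + (dot3 g h - (s - t) * dot3 g w)) by ring.
  eapply Rle_trans; [apply Rabs_triang|]. lra.
Qed.

Lemma derivable_pt_lim_locally_zero (phi : R -> R) t l d : 0 < d ->
  (forall s, Rabs (s - t) < d -> phi s = 0) -> derivable_pt_lim phi t l -> l = 0.
Proof.
  intros Hd H0 Hl. apply (uniqueness_limite phi t); [exact Hl|].
  apply (derivable_pt_lim_locally_ext (fct_cte 0) phi t (t - d) (t + d));
    [lra| |apply derivable_pt_lim_const].
  intros z Hz. symmetry. apply H0. Rabs_lra.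
Qed.

Lemma constant_of_derivable_zero (phi : R -> R) T :
  (forall t, Rabs t < T -> derivable_pt_lim phi t 0) -> forall t, Rabs t < T -> phi t = phi 0.
Proof.
  intros H t Ht. destruct (Rtotal_order 0 t) as [Hp|[<-|Hn]]; [| reflexivity |].
  - destruct (MVT_cor2 phi (fun _ => 0) 0 t Hp) as [c [Hc _]]; [intros c Hc; apply H; Rabs_lra | lra].
  - destruct (MVT_cor2 phi (fun _ => 0) t 0 Hn) as [c [Hc _]]; [intros c Hc; apply H; Rabs_lra | lra].
Qed.

Lemma derivable3_locally_lipschitz gam t w : derivable3 gam t w ->
  exists d, 0 < d /\ forall s, Rabs (s - t) < d -> dist1 (gam s) (gam t) <= (norm1 w + 1) * Rabs (s - t).
Proof.
  intros H. destruct (derivable3_small_o gam t w H 1 Rlt_0_1) as [d [Hd Hs]].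
  exists d. split; auto. intros s Hst. specialize (Hs s Hst).
  pose proof (norm1_le_dist1 (sub3 (gam s) (gam t)) (scal3 (s - t) w)). rewrite norm1_scal in H0.
  fold (dist1 (gam s) (gam t)) in H0. lra.
Qed.

(** * Flows of Lipschitz vector fields *)

Definition lipschitz_bounded (p : R3) (r : R) (F : R3 -> R3) (K B : R) : Prop :=
  (forall q q', dist1 q p < r -> dist1 q' p < r -> dist1 (F q) (F q') <= K * dist1 q q') /\
  (forall q, dist1 q p < r -> norm1 (F q) <= B).

Definition clamp (T t : R) : R := Rmax (- T) (Rmin T t).

Lemma clamp_bound T t : 0 <= T -> Rabs (clamp T t) <= T.
Proof. intros. unfold clamp, Rmax, Rmin. repeat destruct Rle_dec; Rabs_lra. Qed.
Lemma clamp_lipschitz T s t : 0 <= T -> Rabs (clamp T s - clamp T t) <= Rabs (s - t).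
Proof. intros. unfold clamp, Rmax, Rmin. repeat destruct Rle_dec; Rabs_lra. Qed.
Lemma clamp_id T t : Rabs t <= T -> clamp T t = t.
Proof. intros. unfold clamp, Rmax, Rmin. repeat destruct Rle_dec; Rabs_lra. Qed.

(* Time is clamped to [-T, T] so that every iterate is a globally Lipschitz path
   which stays in the ball where F is controlled. *)
Fixpoint picard (F : R3 -> R3) (T : R) (q : R3) (n : nat) (t : R) : R3 :=
  match n with
  | O => q
  | S m => add3 q (RInt3 (fun s => F (picard F T q m (clamp T s))) 0 t)
  end.

Definition flow (F : R3 -> R3) (T : R) (q : R3) (t : R) : R3 :=
  mk3 (real (Lim_seq (fun n => px (picard F T q n t))))
      (real (Lim_seq (fun n => py (picard F T q n t))))
      (real (Lim_seq (fun n => pz (picard F T q n t)))).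

(* [B T <= r / 2] keeps trajectories from the half ball inside the ball, and [K T <= 1 / 2]
   makes the Picard map a contraction of ratio [1 / 2]. *)
Definition flow_time (r K B : R) : R := Rmin (r / (2 * B)) (1 / (2 * K)).

Lemma picard_at_0 F T q n : picard F T q n 0 = q.
Proof.
  destruct n as [|n]; [reflexivity|]. simpl.
  replace (RInt3 (fun s => F (picard F T q n (clamp T s))) 0 0) with zero3.
  - R3_ring.
  - apply R3_ext; simpl; rewrite RInt_point; reflexivity.
Qed.

Section Flow.

Variables (p : R3) (r : R) (F : R3 -> R3) (K B : R).
Hypotheses (Hr : 0 < r) (HK : 0 < K) (HB : 0 < B) (HF : lipschitz_bounded p r F K B).

Local Notation T := (flow_time r K B).
Local Notation P := (picard F (flow_time r K B)).
Local Notation phi := (flow F (flow_time r K B)).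

Lemma flow_time_pos : 0 < T.
Proof. unfold flow_time. apply Rmin_pos; apply Rdiv_lt_0_compat; lra. Qed.

Lemma flow_time_B : B * T <= r / 2.
Proof.
  unfold flow_time. pose proof (Rmin_l (r / (2 * B)) (1 / (2 * K))).
  apply Rmult_le_compat_l with (r := B) in H; [|lra].
  replace (B * (r / (2 * B))) with (r / 2) in H by (field; lra). lra.
Qed.

Lemma flow_time_K : K * T <= / 2.
Proof.
  unfold flow_time. pose proof (Rmin_r (r / (2 * B)) (1 / (2 * K))).
  apply Rmult_le_compat_l with (r := K) in H; [|lra].
  replace (K * (1 / (2 * K))) with (/ 2) in H by (field; lra). lra.
Qed.

Section ClampedPath.
Variables (gam : R -> R3) (q : R3).
Hypotheses (Hq : dist1 q p < r / 2) (Hlip : lipschitz_path gam B) (H0 : gam 0 = q).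

Lemma clamped_path_in_ball s : dist1 (gam (clamp T s)) p < r.
Proof.
  pose proof (lipschitz_path_displacement gam q B (clamp T s) Hlip H0).
  pose proof (clamp_bound T s (Rlt_le _ _ flow_time_pos)). pose proof flow_time_B.
  pose proof (dist1_triangle (gam (clamp T s)) q p).
  assert (B * Rabs (clamp T s) <= B * T) by (apply Rmult_le_compat_l; lra). lra.
Qed.

Lemma clamped_field_lipschitz : lipschitz_path (fun s => F (gam (clamp T s))) (K * B).
Proof.
  intros s s'. eapply Rle_trans; [apply HF; apply clamped_path_in_ball|].
  pose proof (Hlip (clamp T s) (clamp T s')). pose proof (clamp_lipschitz T s s' (Rlt_le _ _ flow_time_pos)).
  rewrite Rmult_assoc. apply Rmult_le_compat_l; [lra|]. nra.
Qed.

Lemma clamped_field_bound s : norm1 (F (gam (clamp T s))) <= B.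
Proof. apply HF, clamped_path_in_ball. Qed.

End ClampedPath.

Lemma picard_lipschitz q : dist1 q p < r / 2 -> forall n, lipschitz_path (P q n) B.
Proof.
  intros Hq n. induction n as [|n IH]; intros s s'.
  - simpl. rewrite dist1_refl. pose proof (Rabs_pos (s - s')). nra.
  - simpl. rewrite dist1_add3_l. unfold dist1.
    rewrite (RInt3_Chasles _ (K * B)) by (apply clamped_field_lipschitz with q; auto using picard_at_0).
    eapply Rle_trans.
    + apply (norm1_RInt3_le _ (K * B)); [apply clamped_field_lipschitz with q; auto using picard_at_0|].
      intros; apply clamped_field_bound with q; auto using picard_at_0.
    + rewrite Rabs_minus_sym. lra.
Qed.

Lemma picard_in_ball q n s : dist1 q p < r / 2 -> dist1 (P q n (clamp T s)) p < r.
Proof. intros Hq. apply clamped_path_in_ball with q; auto using picard_lipschitz, picard_at_0. Qed.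

Lemma picard_field_lipschitz q n : dist1 q p < r / 2 ->
  lipschitz_path (fun s => F (P q n (clamp T s))) (K * B).
Proof. intros Hq. apply clamped_field_lipschitz with q; auto using picard_lipschitz, picard_at_0. Qed.

Lemma picard_step q : dist1 q p < r / 2 ->
  forall n t, Rabs t <= T -> dist1 (P q (S n) t) (P q n t) <= (r / 2) * (/2)^n.
Proof.
  intros Hq n. induction n as [|n IH]; intros t Ht.
  - simpl (P q 0 t). eapply Rle_trans; [apply lipschitz_path_displacement;
    auto using picard_lipschitz, picard_at_0|].
    pose proof flow_time_B. assert (B * Rabs t <= B * T) by (apply Rmult_le_compat_l; lra). simpl. lra.
  - change (dist1 (add3 q (RInt3 (fun s => F (P q (S n) (clamp T s))) 0 t))
                  (add3 q (RInt3 (fun s => F (P q n (clamp T s))) 0 t)) <= r / 2 * (/ 2) ^ S n).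
    rewrite dist1_add3_l. unfold dist1.
    rewrite (RInt3_sub _ _ (K * B) (K * B)) by (apply picard_field_lipschitz; auto).
    eapply Rle_trans.
    + apply (norm1_RInt3_le _ (K * B + K * B)).
      * intros s s'. eapply Rle_trans; [apply dist1_sub3|].
        pose proof (picard_field_lipschitz q (S n) Hq s s').
          pose proof (picard_field_lipschitz q n Hq s s'). lra.
      * intros x _. eapply Rle_trans; [apply HF; apply picard_in_ball; auto|].
        apply Rmult_le_compat_l; [lra|]. apply IH, clamp_bound. pose proof flow_time_pos. lra.
    + rewrite Rminus_0_r. pose proof flow_time_K. simpl.
      assert (0 <= r / 2 * (/ 2) ^ n) by (apply Rmult_le_pos; [lra | apply pow_le; lra]).
      assert (Rabs t * K <= / 2) by nra. nra.
Qed.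

Lemma flow_near_picard q n t : dist1 q p < r / 2 -> Rabs t <= T ->
  dist1 (phi q t) (P q n t) <= 3 * r * (/2)^n.
Proof.
  intros Hq Ht.
  assert (Hcoord : forall c : R3 -> R, (forall a b, Rabs (c a - c b) <= dist1 a b) ->
    Rabs (real (Lim_seq (fun k => c (P q k t))) - c (P q n t)) <= r * (/2)^n).
  { intros c Hc. replace (r * (/2)^n) with (2 * (r / 2) * (/2)^n) by field.
    apply (Lim_seq_geometric_error (fun k => c (P q k t))). intros k.
    eapply Rle_trans; [apply Hc | apply picard_step; auto]. }
  pose proof (Hcoord px Rabs_px_le_dist1). pose proof (Hcoord py Rabs_py_le_dist1).
  pose proof (Hcoord pz Rabs_pz_le_dist1).
  change (dist1 (phi q t) (P q n t)) with
    (Rabs (real (Lim_seq (fun k => px (P q k t))) - px (P q n t))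
     + Rabs (real (Lim_seq (fun k => py (P q k t))) - py (P q n t))
     + Rabs (real (Lim_seq (fun k => pz (P q k t))) - pz (P q n t))).
  lra.
Qed.

Lemma flow_lipschitz q s t : dist1 q p < r / 2 -> Rabs s <= T -> Rabs t <= T ->
  dist1 (phi q s) (phi q t) <= B * Rabs (s - t).
Proof.
  intros Hq Hs Ht. apply le_of_le_geometric with (c := 6 * r). intros n.
  pose proof (flow_near_picard q n s Hq Hs). pose proof (flow_near_picard q n t Hq Ht).
  pose proof (picard_lipschitz q Hq n s t).
  pose proof (dist1_triangle (phi q s) (P q n s) (phi q t)).
  pose proof (dist1_triangle (P q n s) (P q n t) (phi q t)).
  pose proof (dist1_sym (P q n t) (phi q t)). lra.
Qed.

Lemma flow_at_0 q : dist1 q p < r / 2 -> phi q 0 = q.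
Proof.
  intros Hq. apply dist1_le0_eq, le_of_le_geometric with (c := 3 * r). intros n.
  rewrite <- (picard_at_0 F T q n) at 2. rewrite Rplus_0_l.
  apply flow_near_picard; auto. rewrite Rabs_R0. pose proof flow_time_pos. lra.
Qed.

Lemma flow_displacement q t : dist1 q p < r / 2 -> Rabs t <= T -> dist1 (phi q t) q <= B * Rabs t.
Proof.
  intros Hq Ht. rewrite <- (flow_at_0 q Hq) at 2. rewrite <- (Rminus_0_r t) at 2.
  apply flow_lipschitz; auto. rewrite Rabs_R0. pose proof flow_time_pos. lra.
Qed.

Lemma flow_in_ball q t : dist1 q p < r / 2 -> Rabs t <= T -> dist1 (phi q t) p < r.
Proof.
  intros Hq Ht. pose proof (flow_displacement q t Hq Ht). pose proof flow_time_B.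
  pose proof (dist1_triangle (phi q t) q p).
  assert (B * Rabs t <= B * T) by (apply Rmult_le_compat_l; lra). lra.
Qed.

Lemma picard_taylor q n s t : dist1 q p < r / 2 -> Rabs s <= T -> Rabs t <= T ->
  dist1 (sub3 (P q (S n) s) (P q (S n) t)) (scal3 (s - t) (F (P q n t))) <= K * B * ((s - t) * (s - t)).
Proof.
  intros Hq Hs Ht.
  set (h := fun x => F (P q n (clamp T x))).
  assert (Hh : lipschitz_path h (K * B)) by (apply picard_field_lipschitz; auto).
  assert (Hdiff : sub3 (P q (S n) s) (P q (S n) t) = RInt3 h t s).
  { rewrite <- (RInt3_Chasles h (K * B) 0 t s Hh). simpl. fold h. R3_ring. }
  rewrite Hdiff, <- RInt3_const. unfold dist1.
  rewrite (RInt3_sub _ _ (K * B) 0)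
    by (auto; intros u u'; rewrite dist1_refl; pose proof (Rabs_pos (u - u')); lra).
  eapply Rle_trans.
  - apply (norm1_RInt3_le _ (K * B + 0) _ _ (K * B * Rabs (s - t))).
    + intros u u'. eapply Rle_trans; [apply dist1_sub3|]. rewrite dist1_refl. pose proof (Hh u u'). lra.
    + intros x Hx. assert (Hxt : Rabs x <= T /\ Rabs (x - t) <= Rabs (s - t)).
      { unfold Rmin, Rmax in Hx. destruct Rle_dec; split; Rabs_lra. }
      assert (Hin : forall y, Rabs y <= T -> dist1 (P q n y) p < r).
      { intros y Hy. rewrite <- (clamp_id T y) by exact Hy. apply picard_in_ball; auto. }
      fold (dist1 (h x) (F (P q n t))). unfold h. rewrite clamp_id by apply Hxt.
      eapply Rle_trans.
      * apply HF; apply Hin; [apply Hxt | exact Ht].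
      * destruct Hxt as [_ Hxs]. pose proof (picard_lipschitz q Hq n x t).
        rewrite Rmult_assoc. apply Rmult_le_compat_l; [lra|]. nra.
  - rewrite <- Rabs_mul_self. right. ring.
Qed.

Lemma flow_taylor q s t : dist1 q p < r / 2 -> Rabs s <= T -> Rabs t <= T ->
  dist1 (sub3 (phi q s) (phi q t)) (scal3 (s - t) (F (phi q t))) <= K * B * ((s - t) * (s - t)).
Proof.
  intros Hq Hs Ht. apply le_of_le_geometric with (c := 6 * r). intros n.
  assert (Hpow : 0 <= (/2)^n) by (apply pow_le; lra).
  assert (Hiter : dist1 (sub3 (phi q s) (phi q t)) (sub3 (P q (S n) s) (P q (S n) t)) <= 3 * r * (/2)^n).
  { eapply Rle_trans; [apply dist1_sub3|].
    pose proof (flow_near_picard q (S n) s Hq Hs). pose proof (flow_near_picard q (S n) t Hq Ht).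
    simpl pow in *. lra. }
  assert (Hfield : dist1 (scal3 (s - t) (F (P q n t))) (scal3 (s - t) (F (phi q t))) <= 3 * r * (/2)^n).
  { rewrite dist1_scal.
    assert (HFt : dist1 (F (P q n t)) (F (phi q t)) <= K * (3 * r * (/2)^n)).
    { eapply Rle_trans.
      - apply HF; [rewrite <- (clamp_id T t) at 1 by exact Ht;
        apply picard_in_ball | apply flow_in_ball]; auto.
      - apply Rmult_le_compat_l; [lra|]. rewrite dist1_sym. apply flow_near_picard; auto. }
    pose proof flow_time_K. pose proof (Rabs_pos (s - t)). pose proof (dist1_ge0 (F (P q n t)) (F (phi q t))).
    assert (Rabs (s - t) <= 2 * T) by Rabs_lra.
    assert (Rabs (s - t) * K <= 1) by nra.
    nra. }
  pose proof (picard_taylor q n s t Hq Hs Ht).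
  pose proof (dist1_triangle (sub3 (phi q s) (phi q t)) (sub3 (P q (S n) s)
    (P q (S n) t)) (scal3 (s - t) (F (phi q t)))).
  pose proof (dist1_triangle (sub3 (P q (S n) s) (P q (S n) t))
    (scal3 (s - t) (F (P q n t))) (scal3 (s - t) (F (phi q t)))).
  lra.
Qed.

Lemma picard_initial q q' n t : dist1 q p < r / 2 -> dist1 q' p < r / 2 -> Rabs t <= T ->
  dist1 (sub3 (P q n t) (P q' n t)) (sub3 q q') <= 2 * K * Rabs t * dist1 q q'.
Proof.
  intros Hq Hq'. revert t. induction n as [|n IH]; intros t Ht.
  - simpl. rewrite dist1_refl. pose proof (Rabs_pos t). pose proof (dist1_ge0 q q').
    assert (0 <= K * Rabs t * dist1 q q') by (apply Rmult_le_pos; [apply Rmult_le_pos|]; lra). lra.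
  - set (h := fun x => F (P q n (clamp T x))). set (h' := fun x => F (P q' n (clamp T x))).
    assert (Hh : lipschitz_path h (K * B)) by (apply picard_field_lipschitz; auto).
    assert (Hh' : lipschitz_path h' (K * B)) by (apply picard_field_lipschitz; auto).
    assert (Hdiff : sub3 (sub3 (P q (S n) t) (P q' (S n) t)) (sub3 q q')
                    = sub3 (RInt3 h 0 t) (RInt3 h' 0 t)) by (simpl; fold h h'; R3_ring).
    unfold dist1 at 1. rewrite Hdiff, (RInt3_sub _ _ (K * B) (K * B) _ _ Hh Hh').
    eapply Rle_trans.
    + apply (norm1_RInt3_le _ (K * B + K * B) _ _ (2 * K * dist1 q q')).
      * intros u u'. eapply Rle_trans; [apply dist1_sub3|].
        pose proof (Hh u u'). pose proof (Hh' u u'). lra.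
      * intros x _. fold (dist1 (h x) (h' x)). unfold h, h'.
        set (x' := clamp T x).
        assert (Hx' : Rabs x' <= T) by (apply clamp_bound; pose proof flow_time_pos; lra).
        eapply Rle_trans; [apply HF; apply picard_in_ball; auto|].
        pose proof (norm1_le_dist1 (sub3 (P q n x') (P q' n x')) (sub3 q q')). pose proof (IH x' Hx').
        pose proof flow_time_K. pose proof (dist1_ge0 q q').
        assert (2 * K * Rabs x' * dist1 q q' <= dist1 q q').
        { apply Rle_trans with ((2 * K * T) * dist1 q q'); [|nra].
          apply Rmult_le_compat_r; [lra|]. apply Rmult_le_compat_l; lra. }
        fold (dist1 (P q n x') (P q' n x')) (dist1 q q') in *.
        replace (2 * K * dist1 q q') with (K * (2 * dist1 q q')) by ring.
        apply Rmult_le_compat_l; lra.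
    + rewrite Rminus_0_r. pose proof (Rabs_pos t). lra.
Qed.

Lemma flow_initial q q' t : dist1 q p < r / 2 -> dist1 q' p < r / 2 -> Rabs t <= T ->
  dist1 (sub3 (phi q t) (phi q' t)) (sub3 q q') <= 2 * K * Rabs t * dist1 q q'.
Proof.
  intros Hq Hq' Ht. apply le_of_le_geometric with (c := 6 * r). intros n.
  pose proof (picard_initial q q' n t Hq Hq' Ht).
  pose proof (dist1_triangle (sub3 (phi q t) (phi q' t)) (sub3 (P q n t) (P q' n t)) (sub3 q q')).
  pose proof (dist1_sub3 (phi q t) (phi q' t) (P q n t) (P q' n t)).
  pose proof (flow_near_picard q n t Hq Ht). pose proof (flow_near_picard q' n t Hq' Ht). lra.
Qed.

Lemma flow_derivable q t : dist1 q p < r / 2 -> Rabs t < T -> derivable3 (phi q) t (F (phi q t)).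
Proof.
  intros Hq Ht. apply derivable3_taylor2 with (C := K * B) (del := T - Rabs t); [lra|].
  intros s Hs. apply flow_taylor; auto; Rabs_lra.
Qed.

Lemma flow_preserves_level (f : R3 -> R) (g : R3 -> R3) q t :
  (forall x, dist1 x p < r -> has_gradient f x (g x)) ->
  (forall x, dist1 x p < r -> dot3 (g x) (F x) = 0) ->
  dist1 q p < r / 2 -> Rabs t < T -> f (phi q t) = f q.
Proof.
  intros Hgrad Horth Hq Ht. rewrite <- (flow_at_0 q Hq) at 2.
  apply (constant_of_derivable_zero (fun s => f (phi q s)) T); auto. intros s Hs.
  assert (Hin : dist1 (phi q s) p < r) by (apply flow_in_ball; auto; lra).
  rewrite <- (Horth _ Hin). apply gradient_chain_rule; [apply Hgrad, Hin | apply flow_derivable; auto].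
Qed.

End Flow.

(** * Lipschitz bounded vector fields *)

Lemma lipschitz_bounded_bound_ge0 p r F K B : 0 < r -> lipschitz_bounded p r F K B -> 0 <= B.
Proof.
  intros Hr [_ HB]. pose proof (HB p). rewrite dist1_refl in H. pose proof (norm1_ge0 (F p)).
  specialize (H Hr). lra.
Qed.

Lemma lipschitz_bounded_mono p r F K B K' B' :
  lipschitz_bounded p r F K B -> K <= K' -> B <= B' -> lipschitz_bounded p r F K' B'.
Proof.
  intros [HL HB] HK HB'. split.
  - intros q q' Hq Hq'. pose proof (HL q q' Hq Hq'). pose proof (dist1_ge0 q q'). nra.
  - intros q Hq. pose proof (HB q Hq). lra.
Qed.

Lemma lipschitz_bounded_pos p r F K B : lipschitz_bounded p r F K B ->
  exists K' B', 0 < K' /\ 0 < B' /\ lipschitz_bounded p r F K' B'.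
Proof.
  intros H. exists (Rabs K + 1), (Rabs B + 1).
  pose proof (Rabs_pos K); pose proof (Rabs_pos B); pose proof (RRle_abs K); pose proof (RRle_abs B).
  split; [lra | split; [lra|]]. apply (lipschitz_bounded_mono _ _ _ K B); auto; lra.
Qed.

Lemma lipschitz_bounded_common p r F G K1 B1 K2 B2 :
  lipschitz_bounded p r F K1 B1 -> lipschitz_bounded p r G K2 B2 ->
  exists K B, 0 < K /\ 0 < B /\ lipschitz_bounded p r F K B /\ lipschitz_bounded p r G K B.
Proof.
  intros HF HG. exists (Rabs K1 + Rabs K2 + 1), (Rabs B1 + Rabs B2 + 1).
  pose proof (Rabs_pos K1); pose proof (Rabs_pos B1); pose proof (RRle_abs K1); pose proof (RRle_abs B1).
  pose proof (Rabs_pos K2); pose proof (Rabs_pos B2); pose proof (RRle_abs K2); pose proof (RRle_abs B2).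
  split; [lra | split; [lra | split]].
  - apply (lipschitz_bounded_mono _ _ _ K1 B1); auto; lra.
  - apply (lipschitz_bounded_mono _ _ _ K2 B2); auto; lra.
Qed.

Lemma lipschitz_bounded_const p r c : lipschitz_bounded p r (fun _ => c) 0 (norm1 c).
Proof. split; intros; [rewrite dist1_refl, Rmult_0_l | ]; lra. Qed.

Lemma lipschitz_bounded_scal p r c F K B :
  lipschitz_bounded p r F K B -> lipschitz_bounded p r (fun q => scal3 c (F q)) (Rabs c * K) (Rabs c * B).
Proof.
  intros [HL HB]. pose proof (Rabs_pos c). split.
  - intros q q' Hq Hq'. rewrite dist1_scal, Rmult_assoc. apply Rmult_le_compat_l; auto.
  - intros q Hq. rewrite norm1_scal. apply Rmult_le_compat_l; auto.
Qed.

Lemma lipschitz_bounded_cross p r F G K1 B1 K2 B2 : 0 < r ->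
  lipschitz_bounded p r F K1 B1 -> lipschitz_bounded p r G K2 B2 ->
  lipschitz_bounded p r (fun q => cross3 (F q) (G q)) (K1 * B2 + B1 * K2) (B1 * B2).
Proof.
  intros Hr HF HG.
  pose proof (lipschitz_bounded_bound_ge0 _ _ _ _ _ Hr HF).
  pose proof (lipschitz_bounded_bound_ge0 _ _ _ _ _ Hr HG).
  destruct HF as [FL FB], HG as [GL GB]. split.
  - intros q q' Hq Hq'.
    replace (dist1 (cross3 (F q) (G q)) (cross3 (F q') (G q')))
      with (norm1 (add3 (cross3 (sub3 (F q) (F q')) (G q)) (cross3 (F q') (sub3 (G q) (G q')))))
      by (unfold dist1; f_equal; R3_ring).
    eapply Rle_trans; [apply norm1_add|].
    pose proof (norm1_cross3_le (sub3 (F q) (F q')) (G q)).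
    pose proof (norm1_cross3_le (F q') (sub3 (G q) (G q'))).
    pose proof (FL q q' Hq Hq'). pose proof (GL q q' Hq Hq'). pose proof (FB q' Hq'). pose proof (GB q Hq).
    unfold dist1 in *.
    pose proof (norm1_ge0 (sub3 (F q) (F q'))). pose proof (norm1_ge0 (sub3 (G q) (G q'))).
    pose proof (norm1_ge0 (F q')). pose proof (norm1_ge0 (G q)). pose proof (norm1_ge0 (sub3 q q')).
    assert (norm1 (sub3 (F q) (F q')) * norm1 (G q) <= K1 * norm1 (sub3 q q') * B2)
      by (apply Rmult_le_compat; auto).
    assert (norm1 (F q') * norm1 (sub3 (G q) (G q')) <= B1 * (K2 * norm1 (sub3 q q')))
      by (apply Rmult_le_compat; auto).
    nra.
  - intros q Hq. eapply Rle_trans; [apply norm1_cross3_le|]. apply Rmult_le_compat; auto using norm1_ge0.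
Qed.

Lemma lipschitz_bounded_of_dist3 p r g Kg : 0 < r ->
  (forall q q', dist3 q p < r -> dist3 q' p < r -> dist3 (g q) (g q') <= Kg * dist3 q q') ->
  lipschitz_bounded p r g (2 * Rabs Kg) (norm1 (g p) + 2 * Rabs Kg * r).
Proof.
  intros Hr H. pose proof (Rabs_pos Kg). pose proof (RRle_abs Kg).
  assert (HL : forall q q', dist1 q p < r -> dist1 q' p < r ->
    dist1 (g q) (g q') <= 2 * Rabs Kg * dist1 q q').
  { intros q q' Hq Hq'. pose proof (dist3_le_dist1 q p). pose proof (dist3_le_dist1 q' p).
    pose proof (H q q' ltac:(lra) ltac:(lra)). pose proof (dist1_le_2dist3 (g q) (g q')).
    pose proof (dist3_le_dist1 q q'). pose proof (dist3_ge0 q q'). nra. }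
  split; auto. intros q Hq.
  pose proof (norm1_le_dist1 (g q) (g p)). pose proof (HL q p Hq ltac:(rewrite dist1_refl; lra)).
  assert (2 * Rabs Kg * dist1 q p <= 2 * Rabs Kg * r) by (apply Rmult_le_compat_l; lra). lra.
Qed.

Definition horizontal_normal (q : R3) : R3 := mk3 (py q / 2) (- px q / 2) 1.

Lemma Hplane_iff_orthogonal q v : Hplane q v <-> dot3 (horizontal_normal q) v = 0.
Proof.
  split.
  - intros (a & b & ->). unfold horizontal_normal, Xf, Yf. unfold_R3. field.
  - intros H. exists (px v), (py v). unfold horizontal_normal, Xf, Yf in *. apply R3_ext; unfold_R3; lra.
Qed.

Lemma horizontal_normal_neq0 q : horizontal_normal q <> zero3.
Proof. intros H. apply (f_equal pz) in H. unfold horizontal_normal, zero3 in H. simpl in H. lra. Qed.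

Lemma lipschitz_bounded_horizontal_normal p r :
  lipschitz_bounded p r horizontal_normal 1 (norm1 p + r + 1).
Proof.
  split.
  - intros q q' _ _. unfold horizontal_normal. unfold_R3. Rabs_lra.
  - intros q Hq.
    assert (norm1 (horizontal_normal q) <= norm1 q + 1) by (unfold horizontal_normal; unfold_R3; Rabs_lra).
    pose proof (norm1_le_dist1 q p). lra.
Qed.

(** * Tangent planes of regular level sets *)

Section RegularLevelSet.

Variables (M : R3 -> Prop) (p0 : R3) (r0 : R) (f : R3 -> R) (g : R3 -> R3) (Kg Bg : R).
Hypotheses (Hr0 : 0 < r0) (Hgrad : forall q, dist1 q p0 < r0 -> has_gradient f q (g q))
  (Hg : lipschitz_bounded p0 r0 g Kg Bg) (HMf : forall q, dist1 q p0 < r0 -> (M q <-> f q = 0))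
  (HM0 : M p0) (Hg0 : g p0 <> zero3).

Lemma tangent_space_orthogonal v : tangent_space M p0 v -> dot3 (g p0) v = 0.
Proof.
  intros (gam & del & Hdel & Hgam0 & HgamM & Hder).
  assert (Hchain : derivable_pt_lim (fun s => f (gam s)) 0 (dot3 (g p0) v)).
  { apply gradient_chain_rule; [rewrite Hgam0; apply Hgrad; rewrite dist1_refl; lra | exact Hder]. }
  destruct (derivable3_locally_lipschitz gam 0 v Hder) as [d [Hd Hlip]].
  set (A := norm1 v + 1). assert (HA : 0 < A) by (pose proof (norm1_ge0 v); unfold A; lra).
  apply (derivable_pt_lim_locally_zero (fun s => f (gam s)) 0 _ (Rmin del (Rmin d (r0 / A))));
    [|intros s Hs|exact Hchain].
  - repeat apply Rmin_pos; auto. apply Rdiv_lt_0_compat; lra.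
  - rewrite Rminus_0_r in Hs.
    pose proof (Rmin_l del (Rmin d (r0 / A))); pose proof (Rmin_r del (Rmin d (r0 / A))).
    pose proof (Rmin_l d (r0 / A)); pose proof (Rmin_r d (r0 / A)).
    apply HMf; [|apply HgamM; lra].
    specialize (Hlip s ltac:(rewrite Rminus_0_r; lra)). rewrite Rminus_0_r, Hgam0 in Hlip. fold A in Hlip.
    assert (A * Rabs s < r0).
    { apply Rmult_lt_compat_l with (r := A) in Hs; [|lra].
      eapply Rlt_le_trans; [apply Hs|]. apply Rle_trans with (A * (r0 / A)); [apply Rmult_le_compat_l; lra|].
      right. field. lra. }
    lra.
Qed.

Lemma tangent_space_of_orthogonal v : dot3 (g p0) v = 0 -> tangent_space M p0 v.
Proof.
  intros Hv. set (c := dot3 (g p0) (g p0)). assert (Hc : 0 < c) by (apply dot3_pos, Hg0).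
  (* [F] is tangent to the level sets of [f] and equals [v] at [p0]; its flow is the curve. *)
  set (F := fun q => scal3 (/ c) (cross3 (g q) (cross3 v (g q)))).
  assert (HF0 : F p0 = v).
  { unfold F. cbv beta. rewrite cross3_cross3, Hv. fold c. apply R3_ext; unfold_R3; field; lra. }
  assert (HFg : forall q, dot3 (g q) (F q) = 0) by (intros q; unfold F; unfold_R3; ring).
  destruct (lipschitz_bounded_pos p0 r0 F _ _
    (lipschitz_bounded_scal _ _ (/ c) _ _ _
      (lipschitz_bounded_cross _ _ _ _ _ _ _ _ Hr0 Hg
         (lipschitz_bounded_cross _ _ _ _ _ _ _ _ Hr0 (lipschitz_bounded_const p0 r0 v) Hg))))
    as (K & B & HK & HB & HFLB).
  assert (Hp0 : dist1 p0 p0 < r0 / 2) by (rewrite dist1_refl; lra).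
  pose proof (flow_time_pos r0 K B Hr0 HK HB) as HT.
  exists (flow F (flow_time r0 K B) p0), (flow_time r0 K B).
  split; [exact HT|]. split; [apply (flow_at_0 p0 r0 F K B); auto|]. split.
  - intros t Ht. apply HMf.
    + apply (flow_in_ball p0 r0 F K B); auto; lra.
    + rewrite (flow_preserves_level p0 r0 F K B Hr0 HK HB HFLB f g p0 t); auto.
      apply HMf; auto. rewrite dist1_refl. lra.
  - pose proof (flow_derivable p0 r0 F K B Hr0 HK HB HFLB p0 0 Hp0 ltac:(rewrite Rabs_R0; lra)) as Hd.
    rewrite (flow_at_0 p0 r0 F K B Hr0 HK HB HFLB p0 Hp0), HF0 in Hd. exact Hd.
Qed.

Lemma characteristic_of_parallel :
  cross3 (g p0) (horizontal_normal p0) = zero3 -> characteristic M p0.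
Proof.
  intros Hc. split; auto. intros v. rewrite Hplane_iff_orthogonal.
  assert (Hid : scal3 (dot3 v (horizontal_normal p0)) (g p0) = scal3 (dot3 v (g p0)) (horizontal_normal p0)).
  { pose proof (cross3_cross3 v (g p0) (horizontal_normal p0)) as E. rewrite Hc in E.
    apply sub3_eq_zero3. rewrite <- E. R3_ring. }
  rewrite (dot3_comm (horizontal_normal p0) v). split.
  - intros Ht. rewrite (dot3_comm v (g p0)), (tangent_space_orthogonal v Ht), scal3_0 in Hid.
    exact (scal3_eq_zero3 _ _ Hid Hg0).
  - intros Hn. apply tangent_space_of_orthogonal. rewrite Hn, scal3_0 in Hid. rewrite dot3_comm.
    exact (scal3_eq_zero3 _ _ (eq_sym Hid) (horizontal_normal_neq0 p0)).
Qed.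

End RegularLevelSet.

(** * Horizontal curves and bi-Lipschitz maps *)

Lemma ordered_intervals_le a l b : ordered_intervals a l b -> a <= b.
Proof.
  revert a. induction l as [|[s t] l IH]; simpl; intros a H; auto.
  destruct H as (H1 & H2 & H3). pose proof (IH t H3). lra.
Qed.

Lemma abs_continuous_of_lipschitz (gam : R -> R3) a b L : 0 < L ->
  (forall s t, a <= s <= b -> a <= t <= b -> dist3 (gam t) (gam s) <= L * Rabs (t - s)) ->
  abs_continuous_on a b gam.
Proof.
  intros HL H e He. exists (e / L). split; [apply Rdiv_lt_0_compat; auto|].
  assert (Hvar : forall l a', a <= a' -> ordered_intervals a' l b ->
    total_variation gam l <= L * total_length l).
  { induction l as [|[s t] l IH]; simpl; intros a' Ha Ho; [lra|].
    destruct Ho as (H1 & H2 & H3). pose proof (ordered_intervals_le _ _ _ H3).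
    pose proof (H s t ltac:(lra) ltac:(lra)). rewrite Rabs_right in H4 by lra.
    pose proof (IH t ltac:(lra) H3). lra. }
  intros l Ho Hl. pose proof (Hvar l a (Rle_refl a) Ho).
  apply Rmult_lt_compat_l with (r := L) in Hl; auto.
  replace (L * (e / L)) with e in Hl by (field; lra). lra.
Qed.

Lemma null_set_empty (N : R -> Prop) : (forall t, ~ N t) -> null_set N.
Proof.
  intros H e He. exists (fun _ => 0), (fun _ => 0). split; [intros; lra|]. split.
  - intros t Ht. exfalso. exact (H t Ht).
  - intros n. induction n as [|n IH]; simpl; lra.
Qed.

Lemma horizontal_curve_of_derivable a b (gam : R -> R3) L : 0 < L ->
  (forall s t, a <= s <= b -> a <= t <= b -> dist3 (gam t) (gam s) <= L * Rabs (t - s)) ->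
  (forall t, a <= t <= b -> exists w, derivable3 gam t w /\ dot3 (horizontal_normal (gam t)) w = 0) ->
  horizontal_curve a b gam.
Proof.
  intros HL Hlip Hder. split; [apply abs_continuous_of_lipschitz with L; auto|].
  apply null_set_empty. intros t [Ht Hnot]. apply Hnot.
  destruct (Hder t Ht) as (w & (Dx & Dy & Dz) & Hw).
  exists (px w), (py w), (pz w). split; [exact Dx | split; [exact Dy | split; [exact Dz|]]].
  unfold horizontal_normal, dot3, mk3, px, py, pz in *. simpl in *. lra.
Qed.

Lemma sum_Rabs_le_2dist2 a b : Rabs (fst a - fst b) + Rabs (snd a - snd b) <= 2 * dist2 a b.
Proof.
  unfold dist2. set (x := fst a - fst b). set (y := snd a - snd b).
  pose proof (sqrt_pos (x ^ 2 + y ^ 2)). apply Rsqr_incr_0_var; [|lra]. unfold Rsqr.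
  replace (2 * sqrt (x ^ 2 + y ^ 2) * (2 * sqrt (x ^ 2 + y ^ 2)))
    with (4 * (sqrt (x ^ 2 + y ^ 2) * sqrt (x ^ 2 + y ^ 2))) by ring.
  rewrite sqrt_sqrt by nra.
  pose proof (Rabs_mul_self x); pose proof (Rabs_mul_self y).
  pose proof (Rabs_pos x); pose proof (Rabs_pos y).
  pose proof (Rle_0_sqr (Rabs x - Rabs y)). unfold Rsqr in *. simpl. nra.
Qed.

Lemma norm3_orthonormal_comb W0 V0 x y : dot3 W0 W0 = 1 -> dot3 V0 V0 = 1 -> dot3 W0 V0 = 0 ->
  norm3 (add3 (scal3 x W0) (scal3 y V0)) = sqrt (x ^ 2 + y ^ 2).
Proof.
  intros H1 H2 H3. unfold norm3. f_equal.
  transitivity (x * x * dot3 W0 W0 + y * y * dot3 V0 V0 + 2 * x * y * dot3 W0 V0); [unfold_R3; ring|].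
  rewrite H1, H2, H3. ring.
Qed.

Lemma bilipschitz_of_affine_approx e (G : R * R -> R3) W0 V0 :
  dot3 W0 W0 = 1 -> dot3 V0 V0 = 1 -> dot3 W0 V0 = 0 ->
  (forall a b, in_square e a -> in_square e b ->
     norm1 (sub3 (sub3 (G a) (G b)) (add3 (scal3 (fst a - fst b) W0) (scal3 (snd a - snd b) V0)))
       <= / 2 * dist2 a b) ->
  bi_lipschitz_on_square 2 e G.
Proof.
  intros HW HV HWV Happrox a b Ha Hb.
  set (A := add3 (scal3 (fst a - fst b) W0) (scal3 (snd a - snd b) V0)).
  set (E := sub3 (sub3 (G a) (G b)) A).
  assert (HA : norm3 A = dist2 a b) by (apply norm3_orthonormal_comb; auto).
  assert (HE : norm3 E <= / 2 * dist2 a b) by (eapply Rle_trans;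
    [apply norm3_le_norm1 | apply Happrox; auto]).
  assert (Hup : norm3 (add3 A E) <= norm3 A + norm3 E) by apply norm3_triangle.
  assert (Hlow : norm3 A <= norm3 (add3 A E) + norm3 E).
  { replace A with (add3 (add3 A E) (scal3 (-1) E)) at 1 by R3_ring.
    eapply Rle_trans; [apply norm3_triangle|]. right. f_equal. unfold norm3. f_equal. unfold_R3. ring. }
  replace (add3 A E) with (sub3 (G a) (G b)) in Hup, Hlow by (unfold E; R3_ring).
  rewrite <- dist3_norm3 in Hup, Hlow. pose proof (sqrt_pos ((fst a - fst b) ^ 2 + (snd a - snd b) ^ 2)).
  fold (dist2 a b) in *. lra.
Qed.

Lemma first_order_error X Y d w w0 C1 C2 :
  dist1 (sub3 X Y) (scal3 d w) <= C1 -> dist1 w w0 <= C2 ->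
  norm1 (sub3 (sub3 X Y) (scal3 d w0)) <= C1 + Rabs d * C2.
Proof.
  intros H1 H2.
  replace (sub3 (sub3 X Y) (scal3 d w0)) with (add3 (sub3 (sub3 X Y) (scal3 d w)) (scal3 d (sub3 w w0)))
    by R3_ring.
  eapply Rle_trans; [apply norm1_add|]. rewrite norm1_scal.
  pose proof (Rabs_pos d). fold (dist1 (sub3 X Y) (scal3 d w)) (dist1 w w0).
  apply Rplus_le_compat; [exact H1 | apply Rmult_le_compat_l; auto].
Qed.

(** * The chart *)

Section Chart.

Variables (M : R3 -> Prop) (f : R3 -> R) (g W V : R3 -> R3) (p0 : R3) (r K B : R).
Hypotheses (Hr : 0 < r) (HK : 0 < K) (HB : 0 < B)
  (HW : lipschitz_bounded p0 r W K B) (HV : lipschitz_bounded p0 r V K B)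
  (Hgrad : forall q, dist1 q p0 < r -> has_gradient f q (g q))
  (HMf : forall q, dist1 q p0 < r -> (M q <-> f q = 0)) (HM0 : M p0)
  (HWg : forall q, dot3 (g q) (W q) = 0) (HVg : forall q, dot3 (g q) (V q) = 0)
  (HWW : dot3 (W p0) (W p0) = 1) (HVV : dot3 (V p0) (V p0) = 1) (HWV : dot3 (W p0) (V p0) = 0)
  (HWh : forall q, dot3 (horizontal_normal q) (W q) = 0).

Local Notation T := (flow_time r K B).

Definition chart (a : R * R) : R3 := flow W T (flow V T p0 (snd a)) (fst a).
(* The factor [/ (20 * K * B)] makes the affine approximation error of [chart] at most
   [5 K B e (|du| + |dv|) <= (|du| + |dv|) / 4 <= dist2 / 2]. *)
Definition chart_size : R := Rmin (T / 2) (/ (20 * K * B)).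

Local Notation e := chart_size.
Local Notation spine v := (flow V T p0 v).

Lemma chart_size_pos : 0 < e.
Proof.
  pose proof (flow_time_pos r K B Hr HK HB). unfold chart_size.
  apply Rmin_pos; [lra | apply Rinv_0_lt_compat; nra].
Qed.

Lemma chart_size_T : e <= T / 2.
Proof. apply Rmin_l. Qed.

Lemma chart_size_KB : K * B * e <= / 20.
Proof.
  assert (H : e <= / (20 * K * B)) by apply Rmin_r.
  apply Rmult_le_compat_l with (r := 20 * K * B) in H; [|nra].
  rewrite Rinv_r in H by nra. lra.
Qed.

Lemma p0_in_half_ball : dist1 p0 p0 < r / 2.
Proof. rewrite dist1_refl. lra. Qed.

Lemma spine_near v : Rabs v <= e -> dist1 (spine v) p0 <= B * e /\ dist1 (spine v) p0 < r / 2.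
Proof.
  intros Hv. pose proof chart_size_T; pose proof (flow_time_B r K B HB);
    pose proof (flow_time_pos r K B Hr HK HB).
  pose proof (flow_displacement p0 r V K B Hr HK HB HV p0 v p0_in_half_ball ltac:(lra)).
  assert (B * Rabs v <= B * e) by (apply Rmult_le_compat_l; lra).
  assert (B * e <= B * (T / 2)) by (apply Rmult_le_compat_l; lra). lra.
Qed.

Lemma chart_near u v : Rabs u <= e -> Rabs v <= e ->
  dist1 (chart (u, v)) p0 <= 2 * B * e /\ dist1 (chart (u, v)) p0 < r.
Proof.
  intros Hu Hv. destruct (spine_near v Hv) as [H1 H2].
  pose proof chart_size_T. pose proof (flow_time_pos r K B Hr HK HB).
  unfold chart; simpl. split; [|apply (flow_in_ball p0 r W K B); auto; lra].
  pose proof (flow_displacement p0 r W K B Hr HK HB HW (spine v) u H2 ltac:(lra)).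
  pose proof (dist1_triangle (flow W T (spine v) u) (spine v) p0).
  assert (B * Rabs u <= B * e) by (apply Rmult_le_compat_l; lra). lra.
Qed.

Lemma chart_origin : chart (0, 0) = p0.
Proof.
  unfold chart; simpl.
  rewrite (flow_at_0 p0 r V K B Hr HK HB HV p0 p0_in_half_ball).
  exact (flow_at_0 p0 r W K B Hr HK HB HW p0 p0_in_half_ball).
Qed.

Lemma chart_in_M a : in_square e a -> M (chart a).
Proof.
  destruct a as [u v]. intros Hsq. unfold in_square in Hsq; simpl in Hsq.
  assert (Hu : Rabs u <= e) by Rabs_lra. assert (Hv : Rabs v <= e) by Rabs_lra.
  pose proof chart_size_T. pose proof (flow_time_pos r K B Hr HK HB).
  apply HMf; [apply chart_near; auto|]. unfold chart; simpl.
  rewrite (flow_preserves_level p0 r W K B Hr HK HB HW f g); auto; [|apply spine_near; auto | lra].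
  rewrite (flow_preserves_level p0 r V K B Hr HK HB HV f g); auto; [|apply p0_in_half_ball | lra].
  apply HMf; [rewrite dist1_refl; lra | exact HM0].
Qed.

Lemma in_square_Rabs u v : in_square e (u, v) -> Rabs u <= e /\ Rabs v <= e.
Proof. unfold in_square; simpl. intros [Hu Hv]. split; Rabs_lra. Qed.

Lemma quadratic_le_linear d : Rabs d <= 2 * e -> K * B * (d * d) <= 2 * K * B * e * Rabs d.
Proof.
  intros Hd. rewrite <- Rabs_mul_self. pose proof (Rabs_pos d).
  replace (2 * K * B * e * Rabs d) with ((K * B * Rabs d) * (2 * e)) by ring.
  rewrite <- Rmult_assoc. apply Rmult_le_compat_l; [|exact Hd].
  apply Rmult_le_pos; [apply Rmult_le_pos|]; lra.
Qed.

Lemma chart_shift u v v' : Rabs u <= e -> Rabs v <= e -> Rabs v' <= e ->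
  norm1 (sub3 (sub3 (chart (u, v)) (chart (u, v'))) (sub3 (spine v) (spine v')))
    <= 2 * K * B * e * Rabs (v - v').
Proof.
  intros Hu Hv Hv'. pose proof chart_size_T. pose proof (flow_time_pos r K B Hr HK HB).
  pose proof (flow_initial p0 r W K B Hr HK HB HW (spine v) (spine v') u
    (proj2 (spine_near v Hv)) (proj2 (spine_near v' Hv')) ltac:(lra)).
  pose proof (flow_lipschitz p0 r V K B Hr HK HB HV p0 v v' p0_in_half_ball ltac:(lra) ltac:(lra)).
  pose proof (dist1_ge0 (spine v) (spine v')). pose proof (Rabs_pos (v - v')).
  unfold chart; simpl.
  fold (dist1 (sub3 (flow W T (spine v) u) (flow W T (spine v') u)) (sub3 (spine v) (spine v'))).
  eapply Rle_trans; [eassumption|].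
  replace (2 * K * B * e * Rabs (v - v')) with (2 * K * e * (B * Rabs (v - v'))) by ring.
  pose proof chart_size_pos.
  apply Rle_trans with (2 * K * e * dist1 (spine v) (spine v')).
  - apply Rmult_le_compat_r; [lra|]. apply Rmult_le_compat_l; lra.
  - apply Rmult_le_compat_l; [|assumption]. apply Rmult_le_pos; lra.
Qed.

Lemma chart_v_step v v' : Rabs v <= e -> Rabs v' <= e ->
  norm1 (sub3 (sub3 (spine v) (spine v')) (scal3 (v - v') (V p0))) <= 3 * K * B * e * Rabs (v - v').
Proof.
  intros Hv Hv'. pose proof chart_size_T. pose proof (flow_time_pos r K B Hr HK HB).
  destruct (spine_near v' Hv') as [Hn Hn2].
  eapply Rle_trans; [apply (first_order_error _ _ _ (V (spine v')))|].
  - apply (flow_taylor p0 r V K B Hr HK HB HV); auto; [apply p0_in_half_ball | lra | lra].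
  - eapply Rle_trans; [apply HV; [lra | rewrite dist1_refl; lra]|].
    apply Rmult_le_compat_l with (r := K) in Hn; [exact Hn | lra].
  - pose proof (quadratic_le_linear (v - v') ltac:(Rabs_lra)). pose proof (Rabs_pos (v - v')). nra.
Qed.

Lemma chart_u_step u u' v' : Rabs u <= e -> Rabs u' <= e -> Rabs v' <= e ->
  norm1 (sub3 (sub3 (chart (u, v')) (chart (u', v'))) (scal3 (u - u')
    (W p0))) <= 4 * K * B * e * Rabs (u - u').
Proof.
  intros Hu Hu' Hv'. pose proof chart_size_T. pose proof (flow_time_pos r K B Hr HK HB).
  destruct (chart_near u' v' Hu' Hv') as [Hn Hn2].
  eapply Rle_trans; [apply (first_order_error _ _ _ (W (chart (u', v'))))|].
  - apply (flow_taylor p0 r W K B Hr HK HB HW); auto; [apply spine_near; auto | lra | lra].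
  - eapply Rle_trans; [apply HW; [lra | rewrite dist1_refl; lra]|].
    apply Rmult_le_compat_l with (r := K) in Hn; [exact Hn | lra].
  - pose proof (quadratic_le_linear (u - u') ltac:(Rabs_lra)). pose proof (Rabs_pos (u - u')). nra.
Qed.

Lemma chart_affine_error a b : in_square e a -> in_square e b ->
  norm1 (sub3 (sub3 (chart a) (chart b)) (add3 (scal3 (fst a - fst b) (W p0)) (scal3 (snd a - snd b) (V p0))))
    <= / 2 * dist2 a b.
Proof.
  destruct a as [u v], b as [u' v']. intros Ha Hb. simpl fst; simpl snd.
  destruct (in_square_Rabs _ _ Ha) as [Hu Hv], (in_square_Rabs _ _ Hb) as [Hu' Hv'].
  pose proof (chart_shift u v v' Hu Hv Hv') as H1. pose proof (chart_v_step v v' Hv Hv') as H2.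
  pose proof (chart_u_step u u' v' Hu Hu' Hv') as H3.
  set (X1 := sub3 (sub3 (chart (u, v)) (chart (u, v'))) (sub3 (spine v) (spine v'))) in *.
  set (X2 := sub3 (sub3 (spine v) (spine v')) (scal3 (v - v') (V p0))) in *.
  set (X3 := sub3 (sub3 (chart (u, v')) (chart (u', v'))) (scal3 (u - u') (W p0))) in *.
  replace (sub3 (sub3 (chart (u, v)) (chart (u', v'))) (add3 (scal3 (u - u') (W p0)) (scal3 (v - v') (V p0))))
    with (add3 X1 (add3 X2 X3)) by (unfold X1, X2, X3; R3_ring).
  pose proof (norm1_add X1 (add3 X2 X3)). pose proof (norm1_add X2 X3).
  pose proof (sum_Rabs_le_2dist2 (u, v) (u', v')). simpl in *.
  pose proof chart_size_KB. pose proof (Rabs_pos (u - u')). pose proof (Rabs_pos (v - v')).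
  assert (K * B * e * Rabs (u - u') <= / 20 * Rabs (u - u')) by (apply Rmult_le_compat_r; lra).
  assert (K * B * e * Rabs (v - v') <= / 20 * Rabs (v - v')) by (apply Rmult_le_compat_r; lra).
  lra.
Qed.

Lemma chart_bilipschitz : bi_lipschitz_on_square 2 e chart.
Proof. apply (bilipschitz_of_affine_approx e chart (W p0) (V p0)); auto using chart_affine_error. Qed.

Lemma chart_horizontal v : - e <= v <= e -> horizontal_curve (- e) e (fun u => chart (u, v)).
Proof.
  intros Hv. assert (Hv' : Rabs v <= e) by Rabs_lra. destruct (spine_near v Hv') as [_ Hs].
  pose proof chart_size_T. pose proof (flow_time_pos r K B Hr HK HB).
  apply horizontal_curve_of_derivable with B; auto; unfold chart; simpl.
  - intros s t Hs' Ht'. eapply Rle_trans; [apply dist3_le_dist1|].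
    apply (flow_lipschitz p0 r W K B); auto; Rabs_lra.
  - intros t Ht. exists (W (flow W T (spine v) t)). split; [|apply HWh].
    apply (flow_derivable p0 r W K B); auto. Rabs_lra.
Qed.

Lemma chart_spec :
  exists eps : R, 0 < eps /\
  exists G : R * R -> R3,
    (forall a, in_square eps a -> M (G a)) /\
    bi_lipschitz_on_square 2 eps G /\
    G (0, 0) = p0 /\
    (forall v, - eps <= v <= eps -> horizontal_curve (- eps) eps (fun u => G (u, v))).
Proof.
  exists e. split; [exact chart_size_pos|]. exists chart.
  split; [exact chart_in_M|]. split; [exact chart_bilipschitz|].
  split; [exact chart_origin | exact chart_horizontal].
Qed.

End Chart.

Definition frame_W (g : R3 -> R3) (p q : R3) : R3 :=
  scal3 (/ norm3 (cross3 (g p) (horizontal_normal p))) (cross3 (g q) (horizontal_normal q)).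
Definition frame_V (g : R3 -> R3) (p q : R3) : R3 :=
  scal3 (/ norm3 (cross3 (g p) (cross3 (g p) (horizontal_normal p))))
        (cross3 (g q) (cross3 (g q) (horizontal_normal q))).

Lemma frame_W_orthogonal g p q :
  dot3 (g q) (frame_W g p q) = 0 /\ dot3 (horizontal_normal q) (frame_W g p q) = 0.
Proof. unfold frame_W. split; unfold_R3; ring. Qed.

Lemma frame_V_orthogonal g p q : dot3 (g q) (frame_V g p q) = 0.
Proof. unfold frame_V. unfold_R3. ring. Qed.

Lemma frame_orthonormal g p : g p <> zero3 -> cross3 (g p) (horizontal_normal p) <> zero3 ->
  dot3 (frame_W g p p) (frame_W g p p) = 1 /\ dot3 (frame_V g p p) (frame_V g p p) = 1 /\
  dot3 (frame_W g p p) (frame_V g p p) = 0.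
Proof.
  intros Hg Hn. unfold frame_W, frame_V. split; [|split].
  - apply dot3_normalize, Hn.
  - apply dot3_normalize, cross3_neq0; auto. apply dot3_cross3_l.
  - unfold_R3. ring.
Qed.

Lemma frame_lipschitz_bounded p r g Kg Bg : 0 < r -> lipschitz_bounded p r g Kg Bg ->
  exists K B, 0 < K /\ 0 < B /\
    lipschitz_bounded p r (frame_W g p) K B /\ lipschitz_bounded p r (frame_V g p) K B.
Proof.
  intros Hr Hg.
  pose proof (lipschitz_bounded_cross _ _ _ _ _ _ _ _ Hr Hg (lipschitz_bounded_horizontal_normal p r)) as Hn.
  apply (lipschitz_bounded_common p r _ _ _ _ _ _
    (lipschitz_bounded_scal _ _ _ _ _ _ Hn)
    (lipschitz_bounded_scal _ _ _ _ _ _ (lipschitz_bounded_cross _ _ _ _ _ _ _ _ Hr Hg Hn))).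
Qed.

Theorem lemma4p4 :
  exists L' : R, 1 < L' /\
    forall (M : R3 -> Prop), C11_surface M ->
    forall p0 : R3, H_regular M p0 ->
    exists eps : R, 0 < eps /\
    exists G : R * R -> R3,
      (forall a, in_square eps a -> M (G a)) /\
      bi_lipschitz_on_square L' eps G /\
      G (0, 0) = p0 /\
      (forall v, - eps <= v <= eps ->
         horizontal_curve (- eps) eps (fun u => G (u, v))).
Proof.
  exists 2. split; [lra|].
  intros M HC p0 [HM0 Hnc].
  destruct (HC p0 HM0) as (r & Hr & f & g & Hfg & [Kg HKg] & HMf).
  assert (Hball : forall q, dist1 q p0 < r -> dist3 q p0 < r)
    by (intros q Hq; pose proof (dist3_le_dist1 q p0); lra).
  assert (Hgrad : forall q, dist1 q p0 < r -> has_gradient f q (g q))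
    by (intros q Hq; apply Hfg, Hball, Hq).
  assert (HMf1 : forall q, dist1 q p0 < r -> (M q <-> f q = 0)) by (intros q Hq; apply HMf, Hball, Hq).
  pose proof (lipschitz_bounded_of_dist3 p0 r g Kg Hr HKg) as Hg.
  assert (Hg0 : g p0 <> zero3) by (apply Hfg; rewrite dist3_refl; exact Hr).
  assert (Hn0 : cross3 (g p0) (horizontal_normal p0) <> zero3)
    by (intros H; apply Hnc, (characteristic_of_parallel M p0 r f g _ _ Hr Hgrad Hg HMf1 HM0 Hg0 H)).
  destruct (frame_lipschitz_bounded p0 r g _ _ Hr Hg) as (K & B & HK & HB & HW & HV).
  destruct (frame_orthonormal g p0 Hg0 Hn0) as (HWW & HVV & HWV).
  apply (chart_spec M f g (frame_W g p0) (frame_V g p0) p0 r K B); auto.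
  - intros q. apply frame_W_orthogonal.
  - intros q. apply frame_V_orthogonal.
  - intros q. apply frame_W_orthogonal.
Qed.
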